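(* Let $(\alpha_i^h)\subset W^{-2,2}(0,L)$, $i=1,2,3$, be sequences indexed by $h\to0$, and let $f\in W^{-2,2}(\omega)$ be such that $$\alpha_1^h N+\alpha_2^h\tau_2+\alpha_3^h\tau_3\rightharpoonup f\quad\text{weakly in }W^{-2,2}(\omega).$$ Then there exist $\alpha_i\in W^{-2,2}(0,L)$, $i=1,2,3$, such that $\alpha_i^h\rightharpoonup\alpha_i$ weakly in $W^{-2,2}(0,L)$ for each $i$, and $$f=\alpha_1N+\alpha_2\tau_2+\alpha_3\tau_3.$$ If moreover $f=\partial_s g$ for some $g\in L^2(\omega)$, then $\alpha_i\in L^2(0,L)$ for $i=1,2,3$. If $f=0$, then $\alpha_1=\alpha_2=\alpha_3=0$.
   Context: Let $\gamma:[0,1]\to\mathbb{R}^3$, $\gamma(s)=(0,\gamma_2(s),\gamma_3(s))$, be a simple planar curve of class $C^6$ parametrized by arclength; $\tau:=\dot\gamma$, $n:=(0,-\tau_3,\tau_2)$, $k:=\dot\tau\cdot n$ is the curvature, assumed not identically zero on $[0,1]$; $N:=\gamma\cdot n$, $T:=\gamma\cdot\tau$. Let $\omega=(0,L)\times(0,1)$ with coordinates $(x_1,s)$. An element $\alpha\in W^{-2,2}(0,L)$ is identified with an element of $W^{-2,2}(\omega)$ via $\langle\alpha,\delta\rangle:=\int_0^1\langle\alpha,\delta(s,\cdot)\rangle_{W^{-2,2}(0,L),W^{2,2}_0(0,L)}\,ds$ for $\delta\in C_0^\infty(\omega)$, extended by density to $W^{2,2}_0(\omega)$; for $\beta\in C([0,1])$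 the product $\alpha\beta\in W^{-2,2}(\omega)$ is defined by $\langle\alpha\beta,\delta\rangle:=\langle\alpha,\beta\delta\rangle$. *)

From Stdlib Require Import Reals Lra Classical ClassicalEpsilon.
Open Scope R_scope.

(** Total Riemann integral (0 if not Riemann integrable). *)
Definition RInt (f : R -> R) (a b : R) : R :=
  epsilon (inhabits 0)
    (fun v => exists pr : Riemann_integrable f a b, RiemannInt pr = v).

(** Derivative (meaningful where f is differentiable). *)
Definition der (f : R -> R) (x : R) : R :=
  epsilon (inhabits 0) (fun l => derivable_pt_lim f x l).

Definition smooth1 (f : R -> R) : Prop :=
  exists D : nat -> R -> R, D 0%nat = f /\
    forall k x, derivable_pt_lim (D k) x (D (S k) x).

Definition test1 (L : R) (phi : R -> R) : Prop :=
  smooth1 phi /\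
  exists a b, 0 < a /\ a < b /\ b < L /\
    forall x, (x < a \/ b < x) -> phi x = 0.

Definition H2norm1 (L : R) (phi : R -> R) : R :=
  sqrt (RInt (fun x => phi x ^ 2 + der phi x ^ 2 + der (der phi) x ^ 2) 0 L).

Definition L2norm1 (L : R) (phi : R -> R) : R :=
  sqrt (RInt (fun x => phi x ^ 2) 0 L).

(** alpha in W^{-2,2}(0,L): bounded linear functional on C_c^infty(0,L)
    for the W^{2,2} norm (hence uniquely extended to W^{2,2}_0(0,L)). *)
Definition Wm22_1 (L : R) (alpha : (R -> R) -> R) : Prop :=
  (forall phi psi c, test1 L phi -> test1 L psi ->
     alpha (fun x => c * phi x + psi x) = c * alpha phi + alpha psi) /\
  exists C, forall phi, test1 L phi -> Rabs (alpha phi) <= C * H2norm1 L phi.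

(** alpha in L^2(0,L) (as a distribution): bounded for the L^2 norm. *)
Definition L2dist1 (L : R) (alpha : (R -> R) -> R) : Prop :=
  exists C, forall phi, test1 L phi -> Rabs (alpha phi) <= C * L2norm1 L phi.

(** Elements of W^{2,2}_0(0,L), represented by W^{2,2}-Cauchy sequences of
    test functions (W^{2,2}_0 is the completion of C_c^infty). *)
Definition W22_0_1 (L : R) (Phi : nat -> R -> R) : Prop :=
  (forall n, test1 L (Phi n)) /\
  forall eps, 0 < eps -> exists N, forall m n, (N <= m)%nat -> (N <= n)%nat ->
    H2norm1 L (fun x => Phi m x - Phi n x) < eps.

(** Weak convergence in W^{-2,2}(0,L): <As h, delta> -> <A, delta> for every
    delta in W^{2,2}_0, the pairing being the limit along an approximating
    Cauchy sequence of test functions. *)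
Definition weak_cv1 (L : R) (As : nat -> (R -> R) -> R) (A : (R -> R) -> R) : Prop :=
  forall Phi, W22_0_1 L Phi ->
  forall (vs : nat -> R) (v : R),
    (forall h, Un_cv (fun n => As h (Phi n)) (vs h)) ->
    Un_cv (fun n => A (Phi n)) v ->
    Un_cv vs v.

Definition jcont (F : R -> R -> R) : Prop :=
  forall x s eps, 0 < eps -> exists d, 0 < d /\
    forall y t, Rabs (y - x) < d -> Rabs (t - s) < d -> Rabs (F y t - F x s) < eps.

Definition smooth2 (f : R -> R -> R) : Prop :=
  exists D : nat -> nat -> R -> R -> R, D 0%nat 0%nat = f /\
    (forall i j, jcont (D i j)) /\
    forall i j x s,
      derivable_pt_lim (fun y => D i j y s) x (D (S i) j x s) /\
      derivable_pt_lim (fun t => D i j x t) s (D i (S j) x s).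

Definition test2 (L : R) (d : R -> R -> R) : Prop :=
  smooth2 d /\
  exists a b c e, 0 < a /\ a < b /\ b < L /\ 0 < c /\ c < e /\ e < 1 /\
    forall x s, (x < a \/ b < x \/ s < c \/ e < s) -> d x s = 0.

Definition Int2 (L : R) (F : R -> R -> R) : R :=
  RInt (fun s => RInt (fun x => F x s) 0 L) 0 1.

Definition dx (d : R -> R -> R) : R -> R -> R := fun x s => der (fun y => d y s) x.
Definition ds (d : R -> R -> R) : R -> R -> R := fun x s => der (fun t => d x t) s.

Definition H2norm2 (L : R) (d : R -> R -> R) : R :=
  sqrt (Int2 L (fun x s => d x s ^ 2 + dx d x s ^ 2 + ds d x s ^ 2
      + dx (dx d) x s ^ 2 + dx (ds d) x s ^ 2 + ds (ds d) x s ^ 2)).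

Definition L2norm2 (L : R) (d : R -> R -> R) : R :=
  sqrt (Int2 L (fun x s => d x s ^ 2)).

Definition Wm22_2 (L : R) (F : (R -> R -> R) -> R) : Prop :=
  (forall d e c, test2 L d -> test2 L e ->
     F (fun x s => c * d x s + e x s) = c * F d + F e) /\
  exists C, forall d, test2 L d -> Rabs (F d) <= C * H2norm2 L d.

(** g in L^2(omega), represented (Riesz) by the bounded linear functional
    delta |-> int g delta on test functions. *)
Definition L2fun2 (L : R) (G : (R -> R -> R) -> R) : Prop :=
  (forall d e c, test2 L d -> test2 L e ->
     G (fun x s => c * d x s + e x s) = c * G d + G e) /\
  exists C, forall d, test2 L d -> Rabs (G d) <= C * L2norm2 L d.

Definition W22_0_2 (L : R) (Phi : nat -> R -> R -> R) : Prop :=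
  (forall n, test2 L (Phi n)) /\
  forall eps, 0 < eps -> exists N, forall m n, (N <= m)%nat -> (N <= n)%nat ->
    H2norm2 L (fun x s => Phi m x s - Phi n x s) < eps.

Definition weak_cv2 (L : R) (Fs : nat -> (R -> R -> R) -> R) (F : (R -> R -> R) -> R) : Prop :=
  forall Phi, W22_0_2 L Phi ->
  forall (vs : nat -> R) (v : R),
    (forall h, Un_cv (fun n => Fs h (Phi n)) (vs h)) ->
    Un_cv (fun n => F (Phi n)) v ->
    Un_cv vs v.

(** The element alpha * beta of W^{-2,2}(omega), for alpha in W^{-2,2}(0,L),
    beta in C([0,1]):  <alpha beta, delta> = int_0^1 beta(s) <alpha, delta(.,s)> ds. *)
Definition embed (alpha : (R -> R) -> R) (beta : R -> R) : (R -> R -> R) -> R :=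
  fun d => RInt (fun s => beta s * alpha (fun x => d x s)) 0 1.

Definition I01 (x : R) : Prop := 0 <= x <= 1.

Definition deriv_within01 (f : R -> R) (x l : R) : Prop :=
  forall eps, 0 < eps -> exists d, 0 < d /\
    forall y, I01 y -> y <> x -> Rabs (y - x) < d ->
      Rabs ((f y - f x) / (y - x) - l) < eps.

Definition cont_within01 (f : R -> R) (x : R) : Prop :=
  forall eps, 0 < eps -> exists d, 0 < d /\
    forall y, I01 y -> Rabs (y - x) < d -> Rabs (f y - f x) < eps.

Definition C6_01 (D : nat -> R -> R) : Prop :=
  (forall k x, (k < 6)%nat -> I01 x -> deriv_within01 (D k) x (D (S k) x)) /\
  (forall x, I01 x -> cont_within01 (D 6%nat) x).

(** gamma = (0, g2 0, g3 0), tau = (0, g2 1, g3 1), n = (0, -tau3, tau2). *)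
Definition tau2 (g2 : nat -> R -> R) : R -> R := g2 1%nat.
Definition tau3 (g3 : nat -> R -> R) : R -> R := g3 1%nat.
Definition curvature (g2 g3 : nat -> R -> R) (s : R) : R :=
  g2 2%nat s * (- g3 1%nat s) + g3 2%nat s * g2 1%nat s.
Definition Nfun (g2 g3 : nat -> R -> R) (s : R) : R :=
  g2 0%nat s * (- g3 1%nat s) + g3 0%nat s * g2 1%nat s.

Definition admissible_curve (g2 g3 : nat -> R -> R) : Prop :=
  C6_01 g2 /\ C6_01 g3 /\
  (forall s, I01 s -> g2 1%nat s ^ 2 + g3 1%nat s ^ 2 = 1) /\
  (forall s t, I01 s -> I01 t -> g2 0%nat s = g2 0%nat t -> g3 0%nat s = g3 0%nat t -> s = t) /\
  (exists s, I01 s /\ curvature g2 g3 s <> 0).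

(** Testing the convergence against products [phi (x1) psi (s)] gives
    [sum_i (int_0^1 w_i psi) alpha_i^h (phi) -> f (phi (x) psi)] with [(w_1, w_2, w_3) = (N, tau2, tau3)].
    These weights are linearly independent: differentiating a relation [c1 N + c2 tau2 + c3 tau3 = 0]
    along the curve with [tau' = k n] at points of nonzero curvature gives [(c2, c3) = c1 (- gamma3, gamma2)],
    so [c1 <> 0] would make [gamma] locally constant. Hence there are test functions [psi_1, psi_2, psi_3]
    with an invertible moment matrix [(int_0^1 w_k psi_j)], and inverting it writes each [alpha_i^h (phi)]
    as a fixed combination of the three convergent sums obtained for [psi = psi_j]. Their limits define [alpha_i];
    these inherit a [W^{-2,2}] bound from [f], an [L^2] bound when [f = d_s g] (the derivative falls on
    [psi_j]), and vanish when [f] does. The representation of [f] on arbitrary test functions follows by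
    exchanging [alpha] with the integral in [s], obtained by differentiating
    [t |-> alpha (int_0^t w (s) delta (., s) ds)]. *)

From Pilot Require Import Defs.
From Stdlib Require Import Reals Lra Lia Classical ClassicalEpsilon FunctionalExtensionality List.
From Coquelicot Require Import Coquelicot.
Open Scope R_scope.

(** * Calculus on the real line *)

Lemma RInt_total_eq f a b : ex_RInt f a b -> Defs.RInt f a b = RInt f a b :> R.
Proof.
  intro Hf; unfold Defs.RInt.
  destruct (epsilon_spec (inhabits 0)
              (fun v => exists pr : Riemann_integrable f a b, RiemannInt pr = v))
    as [pr <-].
  - exists (RiemannInt (ex_RInt_Reals_0 _ _ _ Hf)); eauto.
  - symmetry; apply RInt_Reals.
Qed.

Lemma der_eq f x l : derivable_pt_lim f x l -> der f x = l.
Proof.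
  intro Hf; unfold der.
  eapply uniqueness_limite; [|exact Hf].
  exact (epsilon_spec (inhabits 0) (fun l => derivable_pt_lim f x l) (ex_intro _ l Hf)).
Qed.

Lemma der_eq_fun f g : (forall x, derivable_pt_lim f x (g x)) -> der f = g.
Proof. intro Hf; apply functional_extensionality; intro x; apply der_eq, Hf. Qed.

Lemma derivable_pt_lim_eq_fun f g x l :
  (forall y, f y = g y) -> derivable_pt_lim f x l -> derivable_pt_lim g x l.
Proof. intro Hfg; replace g with f; [auto | apply functional_extensionality; auto]. Qed.

Lemma derivable_pt_lim_eq f x l l' : derivable_pt_lim f x l -> l = l' -> derivable_pt_lim f x l'.
Proof. now intros Hf <-. Qed.

Lemma derivable_pt_lim_scalr c f x l :
  derivable_pt_lim f x l -> derivable_pt_lim (fun y => f y * c) x (l * c).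
Proof.
  intro Hf; rewrite Rmult_comm.
  apply (derivable_pt_lim_eq_fun (fun y => c * f y)); [intro; ring|].
  now apply (derivable_pt_lim_scal f c x l).
Qed.

Lemma derivable_pt_lim_local f g x l r : 0 < r -> (forall y, Rabs (y - x) < r -> f y = g y) ->
  derivable_pt_lim g x l -> derivable_pt_lim f x l.
Proof.
  intros Hr Hfg Hg eps Heps; destruct (Hg eps Heps) as [del Hdel].
  assert (Hm : 0 < Rmin del r) by (destruct del; simpl; apply Rmin_case; lra).
  exists (mkposreal _ Hm); intros h Hh0 Hh; simpl in Hh.
  assert (Rmin del r <= del) by apply Rmin_l; assert (Rmin del r <= r) by apply Rmin_r.
  rewrite !Hfg; [apply Hdel; auto; lra | rewrite Rminus_diag, Rabs_R0; lra |].
  replace (x + h - x) with h by ring; lra.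
Qed.

Lemma derivable_pt_lim_locally_const f x l r K : 0 < r -> (forall y, Rabs (y - x) < r -> f y = K) ->
  derivable_pt_lim f x l -> l = 0.
Proof.
  intros Hr Hf Hl; eapply uniqueness_limite; [exact Hl|].
  apply (derivable_pt_lim_local f (fun _ => K) x 0 r Hr Hf), derivable_pt_lim_const.
Qed.

Lemma Rmult_div_succ_lt C eps : 0 <= C -> 0 < eps -> C * (eps / (C + 1)) < eps.
Proof.
  intros HC He; apply Rlt_le_trans with ((C + 1) * (eps / (C + 1))); [|right; field; lra].
  apply Rmult_lt_compat_r; [apply Rdiv_lt_0_compat|]; lra.
Qed.

Lemma Un_cv_const (c : R) : Un_cv (fun _ => c) c.
Proof. intros eps He; exists 0%nat; intros; unfold R_dist; rewrite Rminus_diag, Rabs_R0; auto. Qed.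

Lemma continuity_pt_intro f x :
  (forall eps, 0 < eps -> exists del, 0 < del /\ forall y, Rabs (y - x) < del -> Rabs (f y - f x) < eps) ->
  continuity_pt f x.
Proof.
  intros Hf eps He; destruct (Hf eps He) as [del [Hdel Hy]].
  exists del; split; auto; intros y [_ Hyx]; exact (Hy y Hyx).
Qed.

Lemma continuity_pt_elim f x : continuity_pt f x ->
  forall eps, 0 < eps -> exists del, 0 < del /\ forall y, Rabs (y - x) < del -> Rabs (f y - f x) < eps.
Proof.
  intros Hf eps He; destruct (Hf eps He) as [del [Hdel Hy]].
  exists del; split; auto; intros y Hyx.
  destruct (Req_dec y x) as [->|Hne]; [rewrite Rminus_diag, Rabs_R0; auto|].
  apply Hy; repeat split; auto.
Qed.

Lemma continuity_pt_cst c x : continuity_pt (fun _ => c) x.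
Proof. now apply continuity_pt_const. Qed.

Lemma continuity_pt_pow2 f x : continuity_pt f x -> continuity_pt (fun y => f y ^ 2) x.
Proof.
  intro Hf; apply (continuity_pt_ext (fun y => f y * (f y * 1))); [intro; simpl; ring|].
  apply continuity_pt_mult, continuity_pt_mult; auto using continuity_pt_cst.
Qed.

Ltac cont := repeat first
  [ apply continuity_pt_plus | apply continuity_pt_minus | apply continuity_pt_pow2
  | apply continuity_pt_mult | apply continuity_pt_opp | apply continuity_pt_cst ].

(** Coquelicot's integration lemmas, restated over [R] so that they rewrite terms built from [Rplus]
    and [Rmult] rather than the generic module operations. *)

Lemma ex_RInt_cont (f : R -> R) a b :
  (forall z, Rmin a b <= z <= Rmax a b -> continuity_pt f z) -> ex_RInt f a b.
Proof.
  intro Hf; apply (ex_RInt_continuous (V:=R_CompleteNormedModule)).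
  intros z Hz; apply continuity_pt_filterlim; auto.
Qed.

Lemma RInt_const_R (c a b : R) : RInt (fun _ => c) a b = (b - a) * c :> R.
Proof. now rewrite RInt_const. Qed.

Lemma RInt_plus_R (f g : R -> R) a b : ex_RInt f a b -> ex_RInt g a b ->
  RInt (fun x => f x + g x) a b = RInt f a b + RInt g a b :> R.
Proof. apply (RInt_plus (V:=R_CompleteNormedModule)). Qed.

Lemma RInt_scal_R (f : R -> R) a b l : ex_RInt f a b -> RInt (fun x => l * f x) a b = l * RInt f a b :> R.
Proof. apply (RInt_scal (V:=R_CompleteNormedModule)). Qed.

Lemma RInt_minus_R (f g : R -> R) a b : ex_RInt f a b -> ex_RInt g a b ->
  RInt (fun x => f x - g x) a b = RInt f a b - RInt g a b :> R.
Proof. apply (RInt_minus (V:=R_CompleteNormedModule)). Qed.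

Lemma RInt_Chasles_R (f : R -> R) a b c : ex_RInt f a b -> ex_RInt f b c ->
  RInt f a b + RInt f b c = RInt f a c :> R.
Proof. apply (RInt_Chasles (V:=R_CompleteNormedModule)). Qed.

Lemma RInt_ext_R (f g : R -> R) a b : (forall x, Rmin a b < x < Rmax a b -> f x = g x) ->
  RInt f a b = RInt g a b :> R.
Proof. apply (RInt_ext (V:=R_CompleteNormedModule)). Qed.

Lemma RInt_point_R (f : R -> R) a : RInt f a a = 0 :> R.
Proof. apply (RInt_point (V:=R_CompleteNormedModule)). Qed.

Lemma RInt_sq_ge0 (f : R -> R) a b : a <= b -> (forall x, continuity_pt f x) ->
  0 <= RInt (fun x => f x ^ 2) a b.
Proof.
  intros Hab Hf; apply RInt_ge_0; auto.
  - apply ex_RInt_cont; intros; cont; auto.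
  - intros; nra.
Qed.

Lemma RInt_scalr_R (u : R -> R) (c : R) a b : (forall x, continuity_pt u x) ->
  RInt (fun x => u x * c) a b = c * RInt u a b :> R.
Proof.
  intro Hu; rewrite <- RInt_scal_R by (apply ex_RInt_cont; auto).
  apply RInt_ext_R; intros; ring.
Qed.

Lemma abs_RInt_le_between (g : R -> R) t h M : (forall s, continuity_pt g s) ->
  (forall s, Rmin t (t + h) <= s <= Rmax t (t + h) -> Rabs (g s) <= M) ->
  Rabs (RInt g t (t + h)) <= Rabs h * M.
Proof.
  intros Hg Hb; assert (Hex : forall a b, ex_RInt g a b)
    by (intros; apply ex_RInt_cont; auto).
  destruct (Rle_dec 0 h) as [Hh|Hh].
  - rewrite (Rabs_pos_eq h) by lra.
    replace h with (t + h - t) at 2 by ring.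
    apply abs_RInt_le_const; auto; [lra|].
    intros s Hs; apply Hb; rewrite Rmin_left, Rmax_right; lra.
  - rewrite (Rabs_left h) by lra.
    rewrite <- (opp_RInt_swap (V:=R_CompleteNormedModule)) by auto.
    change (Rabs (- RInt g (t + h) t) <= - h * M); rewrite Rabs_Ropp.
    replace (- h) with (t - (t + h)) by ring.
    apply abs_RInt_le_const; auto; [lra|].
    intros s Hs; apply Hb; rewrite Rmin_right, Rmax_left; lra.
Qed.

(** * Test functions of one variable *)

Definition smooth_chain (D : nat -> R -> R) := forall k x, derivable_pt_lim (D k) x (D (S k) x).

Definition supported_in (L : R) (phi : R -> R) := exists a b, 0 < a /\ a < b /\ b < L /\
  forall x, (x < a \/ b < x) -> phi x = 0.

Lemma smooth_chain_continuity D k x : smooth_chain D -> continuity_pt (D k) x.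
Proof. intro HD; apply derivable_continuous_pt; exists (D (S k) x); apply HD. Qed.

Lemma smooth_chain_shift D : smooth_chain D -> smooth_chain (fun k => D (S k)).
Proof. intros HD k x; apply HD. Qed.

Lemma smooth_chain_zero : smooth_chain (fun _ _ => 0).
Proof. intros k x; apply derivable_pt_lim_const. Qed.

Lemma smooth_chain_lin c D E : smooth_chain D -> smooth_chain E ->
  smooth_chain (fun k x => c * D k x + E k x).
Proof.
  intros HD HE k x.
  apply (derivable_pt_lim_plus (fun x => c * D k x) (E k)); [|apply HE].
  apply (derivable_pt_lim_scal (D k)), HD.
Qed.

Lemma test1_intro L phi D : D 0%nat = phi -> smooth_chain D -> supported_in L phi -> test1 L phi.
Proof. intros H0 HD Hs; split; [exists D; split|]; auto. Qed.

Lemma test1_elim L phi : test1 L phi -> exists D, D 0%nat = phi /\ smooth_chain D /\ supported_in L phi.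
Proof. intros [[D [H0 HD]] Hs]; exists D; auto. Qed.

Lemma test1_continuity L phi x : test1 L phi -> continuity_pt phi x.
Proof.
  intro Hphi; destruct (test1_elim _ _ Hphi) as [D [<- [HD _]]].
  apply smooth_chain_continuity, HD.
Qed.

Lemma supported_in_lin L c phi psi : supported_in L phi -> supported_in L psi ->
  supported_in L (fun x => c * phi x + psi x).
Proof.
  intros [a1 [b1 [? [? [? Hphi]]]]] [a2 [b2 [? [? [? Hpsi]]]]].
  exists (Rmin a1 a2), (Rmax b1 b2).
  assert (Rmin a1 a2 <= a1) by apply Rmin_l; assert (Rmin a1 a2 <= a2) by apply Rmin_r.
  assert (b1 <= Rmax b1 b2) by apply Rmax_l; assert (b2 <= Rmax b1 b2) by apply Rmax_r.
  repeat split; [apply Rmin_case; lra | lra | apply Rmax_case; lra |].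
  intros x Hx; rewrite Hphi, Hpsi by lra; ring.
Qed.

Lemma test1_lin L c phi psi : test1 L phi -> test1 L psi -> test1 L (fun x => c * phi x + psi x).
Proof.
  intros Hphi Hpsi.
  destruct (test1_elim _ _ Hphi) as [D [<- [HD Hs]]].
  destruct (test1_elim _ _ Hpsi) as [E [<- [HE Ht]]].
  apply (test1_intro L _ (fun k x => c * D k x + E k x)); auto using smooth_chain_lin, supported_in_lin.
Qed.

Lemma test1_zero L : 0 < L -> test1 L (fun _ => 0).
Proof.
  intro HL; apply (test1_intro L _ _ eq_refl smooth_chain_zero).
  exists (L / 3), (2 * L / 3); repeat split; lra.
Qed.

Lemma test1_scal L c phi : 0 < L -> test1 L phi -> test1 L (fun x => c * phi x).
Proof.
  intros HL Hphi; replace (fun x => c * phi x) with (fun x => c * phi x + 0).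
  - apply test1_lin; auto using test1_zero.
  - apply functional_extensionality; intro; ring.
Qed.

Lemma test1_sub L phi psi : 0 < L -> test1 L phi -> test1 L psi -> test1 L (fun x => phi x - psi x).
Proof.
  intros HL Hphi Hpsi; replace (fun x => phi x - psi x) with (fun x => -1 * psi x + phi x).
  - now apply test1_lin.
  - apply functional_extensionality; intro; ring.
Qed.

Lemma test1_deriv L psi D : test1 L psi -> D 0%nat = psi -> smooth_chain D -> test1 L (D 1%nat).
Proof.
  intros Hpsi HD0 HD; destruct (test1_elim _ _ Hpsi) as [_ [_ [_ [a [b [? [? [? Hs]]]]]]]].
  apply (test1_intro L _ (fun k => D (S k))); auto using smooth_chain_shift.
  exists a, b; repeat split; auto; intros x [Hx|Hx].
  - apply (derivable_pt_lim_locally_const (D 0%nat) x _ (a - x) 0); [lra | | apply HD].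
    intros y Hy; rewrite HD0; apply Hs; apply Rabs_def2 in Hy; lra.
  - apply (derivable_pt_lim_locally_const (D 0%nat) x _ (x - b) 0); [lra | | apply HD].
    intros y Hy; rewrite HD0; apply Hs; apply Rabs_def2 in Hy; lra.
Qed.

Lemma H2norm1_eq L phi D : D 0%nat = phi -> smooth_chain D ->
  H2norm1 L phi =
  sqrt (RInt (fun x => D 0%nat x ^ 2) 0 L + RInt (fun x => D 1%nat x ^ 2) 0 L
        + RInt (fun x => D 2%nat x ^ 2) 0 L).
Proof.
  intros <- HD; unfold H2norm1.
  rewrite (der_eq_fun _ _ (HD 0%nat)), (der_eq_fun _ _ (HD 1%nat)).
  assert (Hc : forall k z, continuity_pt (D k) z) by (intros; apply smooth_chain_continuity, HD).
  rewrite RInt_total_eq, !RInt_plus_R; auto; apply ex_RInt_cont; intros; cont; auto.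
Qed.

Lemma H2norm1_le_sup L phi D M : 0 < L -> D 0%nat = phi -> smooth_chain D ->
  (forall k x, (k <= 2)%nat -> 0 <= x <= L -> Rabs (D k x) <= M) ->
  H2norm1 L phi <= sqrt (3 * L) * M.
Proof.
  intros HL HD0 HD HM; rewrite (H2norm1_eq L phi D HD0 HD).
  assert (Hc : forall k z, continuity_pt (D k) z) by (intros; apply smooth_chain_continuity, HD).
  assert (HM2 : forall k x, (k <= 2)%nat -> 0 <= x <= L -> D k x ^ 2 <= M ^ 2).
  { intros k x Hk Hx; specialize (HM k x Hk Hx).
    assert (0 <= M) by (eapply Rle_trans; [apply Rabs_pos | exact HM]).
    apply Rabs_le_between in HM; nra. }
  assert (Hk : forall k, (k <= 2)%nat -> RInt (fun x => D k x ^ 2) 0 L <= L * M ^ 2).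
  { intros k Hk.
    assert (E : RInt (fun _ => M ^ 2) 0 L = L * M ^ 2 :> R) by (rewrite RInt_const_R; ring).
    rewrite <- E.
    apply RInt_le; [lra | apply ex_RInt_cont; intros; cont; auto | apply ex_RInt_cont; intros; cont |].
    intros; apply HM2; auto; lra. }
  assert (0 <= M) by (eapply Rle_trans; [apply Rabs_pos | apply (HM 0%nat 0); lia || lra]).
  rewrite <- (sqrt_pow2 M), <- sqrt_mult_alt by lra.
  assert (Hk0 := Hk 0%nat ltac:(lia)); assert (Hk1 := Hk 1%nat ltac:(lia));
    assert (Hk2 := Hk 2%nat ltac:(lia)).
  apply sqrt_le_1_alt; nra.
Qed.

Lemma L2norm1_eq L phi : (forall x, continuity_pt phi x) ->
  L2norm1 L phi = sqrt (RInt (fun x => phi x ^ 2) 0 L).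
Proof. intro Hphi; unfold L2norm1; rewrite RInt_total_eq; auto; apply ex_RInt_cont; intros; cont; auto. Qed.

Section Wm22.

Variable L : R.
Hypothesis HL : 0 < L.
Variable a : (R -> R) -> R.
Hypothesis Ha : Wm22_1 L a.

Lemma Wm22_1_lin phi psi c : test1 L phi -> test1 L psi ->
  a (fun x => c * phi x + psi x) = c * a phi + a psi.
Proof. apply Ha. Qed.

Lemma Wm22_1_zero : a (fun _ => 0) = 0.
Proof.
  assert (H := Wm22_1_lin _ _ 1 (test1_zero L HL) (test1_zero L HL)); cbv beta in H.
  replace (fun _ : R => 1 * 0 + 0) with (fun _ : R => 0) in H
    by (apply functional_extensionality; intro; ring).
  lra.
Qed.

Lemma Wm22_1_scal phi c : test1 L phi -> a (fun x => c * phi x) = c * a phi.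
Proof.
  intro Hphi; assert (H := Wm22_1_lin phi _ c Hphi (test1_zero L HL)); cbv beta in H.
  rewrite Wm22_1_zero in H.
  replace (fun x => c * phi x + 0) with (fun x => c * phi x) in H
    by (apply functional_extensionality; intro; ring).
  lra.
Qed.

Lemma Wm22_1_sub phi psi : test1 L phi -> test1 L psi -> a (fun x => phi x - psi x) = a phi - a psi.
Proof.
  intros Hphi Hpsi; assert (H := Wm22_1_lin psi phi (-1) Hpsi Hphi); cbv beta in H.
  replace (fun x => -1 * psi x + phi x) with (fun x => phi x - psi x) in H
    by (apply functional_extensionality; intro; ring).
  lra.
Qed.

Lemma Wm22_1_bound : exists C, 0 <= C /\ forall phi, test1 L phi -> Rabs (a phi) <= C * H2norm1 L phi.
Proof.
  destruct Ha as [_ [C HC]]; exists (Rmax C 0); split; [apply Rmax_r|].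
  intros phi Hphi; apply Rle_trans with (C * H2norm1 L phi); auto.
  apply Rmult_le_compat_r; [apply sqrt_pos | apply Rmax_l].
Qed.

Lemma Wm22_1_cauchy Phi : W22_0_1 L Phi -> exists l, Un_cv (fun n => a (Phi n)) l.
Proof.
  intros [HT HC].
  assert (Hc : Cauchy_crit (fun n => a (Phi n))).
  2:{ destruct (Rcomplete.R_complete _ Hc) as [l Hl]; now exists l. }
  intros eps Heps.
  destruct Wm22_1_bound as [C [C0 HCb]].
  destruct (HC (eps / (C + 1))) as [N HN]; [apply Rdiv_lt_0_compat; lra|].
  exists N; intros n m Hn Hm; unfold R_dist; rewrite <- Wm22_1_sub by auto.
  eapply Rle_lt_trans; [apply HCb, test1_sub; auto|].
  apply Rle_lt_trans with (C * (eps / (C + 1))); [|apply Rmult_div_succ_lt; auto].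
  apply Rmult_le_compat_l; [lra | left; auto].
Qed.

Lemma Wm22_1_sup_bound : exists C, 0 <= C /\ forall phi D M, test1 L phi -> D 0%nat = phi -> smooth_chain D ->
  (forall k x, (k <= 2)%nat -> 0 <= x <= L -> Rabs (D k x) <= M) -> Rabs (a phi) <= C * M.
Proof.
  destruct Wm22_1_bound as [C [C0 HC]]; exists (C * sqrt (3 * L)).
  split; [apply Rmult_le_pos; auto; apply sqrt_pos|].
  intros phi D M Hphi HD0 HD HM; eapply Rle_trans; [apply HC; auto|].
  rewrite Rmult_assoc; apply Rmult_le_compat_l; auto; eapply H2norm1_le_sup; eauto.
Qed.

End Wm22.

(** The pairing of [a] with the element of [W^{2,2}_0] represented by the Cauchy sequence [Phi];
    the limit exists by [Wm22_1_cauchy]. *)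
Definition pair1 (a : (R -> R) -> R) (Phi : nat -> R -> R) : R :=
  epsilon (inhabits 0) (fun l => Un_cv (fun n => a (Phi n)) l).

Lemma pair1_cv L a Phi : 0 < L -> Wm22_1 L a -> W22_0_1 L Phi -> Un_cv (fun n => a (Phi n)) (pair1 a Phi).
Proof. intros HL Ha HPhi; unfold pair1; apply epsilon_spec; exact (Wm22_1_cauchy L HL a Ha Phi HPhi). Qed.

Lemma weak_cv1_pair1 L As A : 0 < L -> (forall h, Wm22_1 L (As h)) -> Wm22_1 L A ->
  (forall Phi, W22_0_1 L Phi -> Un_cv (fun h => pair1 (As h) Phi) (pair1 A Phi)) ->
  weak_cv1 L As A.
Proof.
  intros HL HAs HA Hcv Phi HPhi vs v Hvs Hv.
  assert (Ev : v = pair1 A Phi) by (eapply UL_sequence; eauto using pair1_cv).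
  assert (Evs : vs = fun h => pair1 (As h) Phi).
  { apply functional_extensionality; intro h; eapply UL_sequence; eauto using pair1_cv. }
  subst; auto.
Qed.

(** * Smooth bump functions *)

(** The derivatives of [x |-> exp (-1/x)] on [x > 0] are finite sums of terms [c x^-i exp (-1/x)],
    encoded as lists of pairs [(i, c)]; each such sum is [O(x^2)] as [x -> 0+]. *)
Definition flat_term (p : nat * R) (x : R) := snd p * (/ x) ^ fst p * exp (- / x).

Fixpoint flat_sum (l : list (nat * R)) (x : R) : R :=
  match l with nil => 0 | p :: l' => flat_term p x + flat_sum l' x end.

Definition flat_deriv (l : list (nat * R)) : list (nat * R) :=
  flat_map (fun p => (S (fst p), - INR (fst p) * snd p) :: (S (S (fst p)), snd p) :: nil) l.

Lemma flat_term_derivable (c : R) (i : nat) x : 0 < x ->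
  derivable_pt_lim (fun y => c * (/ y) ^ i * exp (- / y)) x
    (- INR i * c * (/ x) ^ S i * exp (- / x) + c * (/ x) ^ S (S i) * exp (- / x)).
Proof.
  intro Hx; apply is_derive_Reals; auto_derive; [lra|].
  destruct i as [|i]; [simpl; field; lra|].
  change (Init.Nat.pred (S i)) with i; simpl pow; field; lra.
Qed.

Lemma flat_sum_derivable l x : 0 < x -> derivable_pt_lim (flat_sum l) x (flat_sum (flat_deriv l) x).
Proof.
  intro Hx; induction l as [|[i c] l IH]; [apply derivable_pt_lim_const|].
  replace (flat_sum (flat_deriv ((i, c) :: l)) x)
    with (flat_term (S i, - INR i * c) x + flat_term (S (S i), c) x + flat_sum (flat_deriv l) x)
    by (unfold flat_deriv; simpl; ring).
  change (flat_sum ((i, c) :: l)) with (fun y => flat_term (i, c) y + flat_sum l y).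
  unfold flat_term; simpl fst; simpl snd.
  eapply derivable_pt_lim_eq; [apply derivable_pt_lim_plus; [apply flat_term_derivable; auto | apply IH]|].
  ring.
Qed.

Lemma pow_le_fact_exp y n : 0 <= y -> y ^ n <= INR (Factorial.fact n) * exp y.
Proof.
  intro Hy; assert (H := exp_ge_taylor y n Hy).
  assert (Hf : 0 < INR (Factorial.fact n)) by apply lt_0_INR, Factorial.lt_O_fact.
  destruct n as [|n]; [simpl in *; lra|].
  rewrite tech5 in H.
  assert (0 <= sum_f_R0 (fun k => y ^ k / INR (Factorial.fact k)) n).
  { apply cond_pos_sum; intro k; apply Rle_mult_inv_pos;
      [apply pow_le; auto | apply lt_0_INR, Factorial.lt_O_fact]. }
  apply Rmult_le_reg_r with (/ INR (Factorial.fact (S n))); [apply Rinv_0_lt_compat; auto|].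
  replace (INR (Factorial.fact (S n)) * exp y * / INR (Factorial.fact (S n))) with (exp y)
    by (field; lra).
  lra.
Qed.

Lemma flat_term_bound p : exists B, 0 <= B /\ forall h, 0 < h -> Rabs (flat_term p h) <= B * h ^ 2.
Proof.
  destruct p as [i c]; exists (Rabs c * INR (Factorial.fact (S (S i)))).
  split; [apply Rmult_le_pos; [apply Rabs_pos | apply pos_INR]|].
  intros h Hh; unfold flat_term; simpl fst; simpl snd.
  set (y := / h); assert (Hy : 0 < y) by (apply Rinv_0_lt_compat; auto).
  assert (Hyh : y * h = 1) by (unfold y; field; lra).
  assert (Hexp : exp y * exp (- y) = 1)
    by (rewrite <- exp_plus; replace (y + - y) with 0 by ring; apply exp_0).
  assert (0 < exp (- y)) by apply exp_pos.
  rewrite !Rabs_mult, (Rabs_pos_eq (exp _)), (Rabs_pos_eq (y ^ i)) by (try apply pow_le; lra).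
  assert (E : y ^ i * exp (- y) = (y ^ S (S i) * exp (- y)) * h ^ 2).
  { simpl; replace (y * (y * y ^ i) * exp (- y) * (h * (h * 1)))
      with ((y * h) * (y * h) * (y ^ i * exp (- y))) by ring.
    rewrite Hyh; ring. }
  assert (E2 : y ^ S (S i) * exp (- y) <= INR (Factorial.fact (S (S i)))).
  { apply Rle_trans with (INR (Factorial.fact (S (S i))) * exp y * exp (- y));
      [apply Rmult_le_compat_r; [lra | apply pow_le_fact_exp; lra] | rewrite Rmult_assoc, Hexp; lra]. }
  assert (0 <= h ^ 2) by (apply pow_le; lra).
  assert (0 <= Rabs c) by apply Rabs_pos.
  rewrite Rmult_assoc, (Rmult_assoc (Rabs c)); apply Rmult_le_compat_l; auto.
  rewrite E; nra.
Qed.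

Lemma flat_sum_bound l : exists B, 0 <= B /\ forall h, 0 < h -> Rabs (flat_sum l h) <= B * h ^ 2.
Proof.
  induction l as [|p l [B [B0 HB]]].
  - exists 0; split; [lra|]; intros; simpl; rewrite Rabs_R0; lra.
  - destruct (flat_term_bound p) as [B' [B0' HB']]; exists (B' + B); split; [lra|].
    intros h Hh; simpl; eapply Rle_trans; [apply Rabs_triang|].
    specialize (HB h Hh); specialize (HB' h Hh); lra.
Qed.

Definition flat (l : list (nat * R)) (x : R) := if Rle_dec x 0 then 0 else flat_sum l x.

Lemma flat_derivable l x : derivable_pt_lim (flat l) x (flat (flat_deriv l) x).
Proof.
  destruct (Rtotal_order x 0) as [Hx|[->|Hx]]; unfold flat at 2.
  - destruct (Rle_dec x 0); [|lra].
    apply (derivable_pt_lim_local _ (fun _ => 0) x 0 (- x)); [lra | | apply derivable_pt_lim_const].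
    intros y Hy; unfold flat; destruct (Rle_dec y 0); auto; apply Rabs_def2 in Hy; lra.
  - destruct (Rle_dec 0 0); [|lra].
    intros eps Heps; destruct (flat_sum_bound l) as [B [B0 HB]].
    assert (Hd : 0 < eps / (B + 1)) by (apply Rdiv_lt_0_compat; lra).
    exists (mkposreal _ Hd); intros h Hh0 Hh; simpl in Hh.
    unfold flat; destruct (Rle_dec 0 0); [|lra]; destruct (Rle_dec (0 + h) 0).
    + replace ((0 - 0) / h - 0) with 0 by (field; auto); rewrite Rabs_R0; lra.
    + replace (0 + h) with h in * by ring.
      assert (Hh1 : 0 < h) by lra; rewrite Rabs_pos_eq in Hh by lra.
      replace ((flat_sum l h - 0) / h - 0) with (flat_sum l h / h) by (field; lra).
      rewrite Rabs_div, (Rabs_pos_eq h) by lra.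
      apply Rmult_lt_reg_r with h; auto.
      unfold Rdiv; rewrite Rmult_assoc, Rinv_l, Rmult_1_r by lra.
      eapply Rle_lt_trans; [apply HB; auto|].
      assert (h * (B + 1) < eps).
      { apply Rmult_lt_reg_r with (/ (B + 1)); [apply Rinv_0_lt_compat; lra|].
        rewrite Rmult_assoc, Rinv_r, Rmult_1_r by lra; exact Hh. }
      simpl; nra.
  - destruct (Rle_dec x 0); [lra|].
    apply (derivable_pt_lim_local _ (flat_sum l) x _ x); [lra | | apply flat_sum_derivable; auto].
    intros y Hy; unfold flat; destruct (Rle_dec y 0); auto; apply Rabs_def2 in Hy; lra.
Qed.

Definition flat_chain (k : nat) := flat (Nat.iter k flat_deriv ((0%nat, 1) :: nil)).

Lemma smooth_chain_flat : smooth_chain flat_chain.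
Proof. intros k x; apply flat_derivable. Qed.

Lemma flat_chain0 x : flat_chain 0%nat x = if Rle_dec x 0 then 0 else exp (- / x).
Proof. unfold flat_chain, flat; simpl; destruct (Rle_dec x 0); auto; unfold flat_term; simpl; ring. Qed.

Lemma smooth_chain_affine D u v : smooth_chain D -> smooth_chain (fun k x => u ^ k * D k (u * x + v)).
Proof.
  intros HD k x.
  assert (H1 : derivable_pt_lim (fun x => u * x + v) x u).
  { eapply derivable_pt_lim_eq;
      [apply derivable_pt_lim_plus; [apply (derivable_pt_lim_scal id), derivable_pt_lim_id
                                    | apply derivable_pt_lim_const] | ring]. }
  eapply derivable_pt_lim_eq;
    [apply derivable_pt_lim_scal, (derivable_pt_lim_comp _ (D k) x u _ H1 (HD k _))|].
  simpl; ring.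
Qed.

(** Leibniz rule: the derivatives of [F 0 * G 0] are sums of terms [c F i G j], encoded as [((i, j), c)]. *)
Fixpoint leibniz_sum (F G : nat -> R -> R) (l : list (nat * nat * R)) (x : R) : R :=
  match l with
  | nil => 0
  | p :: l' => snd p * F (fst (fst p)) x * G (snd (fst p)) x + leibniz_sum F G l' x
  end.

Definition leibniz_deriv (l : list (nat * nat * R)) : list (nat * nat * R) :=
  flat_map (fun p => ((S (fst (fst p)), snd (fst p)), snd p)
                       :: ((fst (fst p), S (snd (fst p))), snd p) :: nil) l.

Lemma leibniz_sum_derivable F G l x : smooth_chain F -> smooth_chain G ->
  derivable_pt_lim (leibniz_sum F G l) x (leibniz_sum F G (leibniz_deriv l) x).
Proof.
  intros HF HG; induction l as [|[[i j] c] l IH]; [apply derivable_pt_lim_const|].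
  replace (leibniz_sum F G (leibniz_deriv (((i, j), c) :: l)) x)
    with (c * F (S i) x * G j x + c * F i x * G (S j) x + leibniz_sum F G (leibniz_deriv l) x)
    by (unfold leibniz_deriv; simpl; ring).
  change (leibniz_sum F G (((i, j), c) :: l)) with (fun y => c * F i y * G j y + leibniz_sum F G l y).
  eapply derivable_pt_lim_eq; [apply derivable_pt_lim_plus; [|apply IH]|].
  - apply (derivable_pt_lim_eq_fun (fun y => c * (F i y * G j y))); [intro; ring|].
    apply derivable_pt_lim_scal, derivable_pt_lim_mult; auto.
  - ring.
Qed.

Definition prod_chain (F G : nat -> R -> R) (k : nat) :=
  leibniz_sum F G (Nat.iter k leibniz_deriv (((0%nat, 0%nat), 1) :: nil)).

Lemma smooth_chain_prod F G : smooth_chain F -> smooth_chain G -> smooth_chain (prod_chain F G).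
Proof. intros HF HG k x; apply leibniz_sum_derivable; auto. Qed.

Lemma prod_chain0 F G x : prod_chain F G 0%nat x = F 0%nat x * G 0%nat x.
Proof. unfold prod_chain; simpl; ring. Qed.

Definition bump_chain (p q : R) :=
  prod_chain (fun k x => 1 ^ k * flat_chain k (1 * x + - p))
             (fun k x => (-1) ^ k * flat_chain k ((-1) * x + q)).

Definition bump p q := bump_chain p q 0%nat.

Lemma smooth_chain_bump p q : smooth_chain (bump_chain p q).
Proof. apply smooth_chain_prod; apply smooth_chain_affine, smooth_chain_flat. Qed.

Lemma bumpE p q x : bump p q x =
  (if Rle_dec (x - p) 0 then 0 else exp (- / (x - p))) * (if Rle_dec (q - x) 0 then 0 else exp (- / (q - x))).
Proof.
  unfold bump, bump_chain; rewrite prod_chain0, !flat_chain0; simpl.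
  replace (1 * x + - p) with (x - p) by ring; replace (-1 * x + q) with (q - x) by ring; ring.
Qed.

Lemma bump_pos p q x : p < x < q -> 0 < bump p q x.
Proof.
  intro Hx; rewrite bumpE; destruct (Rle_dec (x - p) 0); [lra|]; destruct (Rle_dec (q - x) 0); [lra|].
  apply Rmult_lt_0_compat; apply exp_pos.
Qed.

Lemma bump_zero p q x : (x < p \/ q < x) -> bump p q x = 0.
Proof.
  intro Hx; rewrite bumpE; destruct (Rle_dec (x - p) 0); [ring|]; destruct (Rle_dec (q - x) 0); [ring | lra].
Qed.

Lemma test1_bump L p q : 0 < p -> p < q -> q < L -> test1 L (bump p q).
Proof.
  intros; apply (test1_intro L _ (bump_chain p q) eq_refl (smooth_chain_bump p q)).
  exists p, q; repeat split; auto; intros; apply bump_zero; auto.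
Qed.

(** * Tensor products of test functions *)

Lemma jcont_continuity_2d F : jcont F <-> forall x s, continuity_2d_pt F x s.
Proof.
  split.
  - intros HF x s eps; destruct (HF x s eps (cond_pos eps)) as [d [d0 Hd]].
    exists (mkposreal d d0); intros u v Hu Hv; apply Hd; auto.
  - intros HF x s eps He; destruct (HF x s (mkposreal eps He)) as [d Hd].
    exists d; split; [apply cond_pos|]; intros y t Hy Ht; apply Hd; auto.
Qed.

Lemma continuity_2d_pt_fst f x s : continuity_pt f x -> continuity_2d_pt (fun u _ => f u) x s.
Proof. intro Hf; apply (continuity_1d_2d_pt_comp f (fun u _ => u)); auto using continuity_2d_pt_id1. Qed.

Lemma continuity_2d_pt_snd f x s : continuity_pt f s -> continuity_2d_pt (fun _ v => f v) x s.
Proof. intro Hf; apply (continuity_1d_2d_pt_comp f (fun _ v => v)); auto using continuity_2d_pt_id2. Qed.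

Definition tens (phi psi : R -> R) : R -> R -> R := fun x s => phi x * psi s.

Lemma tens_lin phi phi' psi c :
  tens (fun x => c * phi x + phi' x) psi = (fun x s => c * tens phi psi x s + tens phi' psi x s).
Proof. unfold tens; do 2 (apply functional_extensionality; intro); ring. Qed.

Lemma test2_tens L phi psi : test1 L phi -> test1 1 psi -> test2 L (tens phi psi).
Proof.
  intros Hphi Hpsi.
  destruct (test1_elim _ _ Hphi) as [D [<- [HD [a [b [? [? [? Ha]]]]]]]].
  destruct (test1_elim _ _ Hpsi) as [E [<- [HE [c [e [? [? [? Hc]]]]]]]].
  split.
  - exists (fun i j x s => D i x * E j s); repeat split.
    + intros i j; apply jcont_continuity_2d; intros x s; apply continuity_2d_pt_mult;
        [apply continuity_2d_pt_fst | apply continuity_2d_pt_snd]; apply smooth_chain_continuity; auto.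
    + apply derivable_pt_lim_scalr, HD.
    + apply (derivable_pt_lim_scal (E j)), HE.
  - exists a, b, c, e; repeat split; auto.
    intros x s [Hx|[Hx|[Hs|Hs]]]; unfold tens; rewrite ?Ha, ?Hc by auto; ring.
Qed.

Lemma dx_tens phi psi D : smooth_chain D -> D 0%nat = phi -> dx (tens phi psi) = tens (D 1%nat) psi.
Proof.
  intros HD <-; unfold dx, tens.
  do 2 (apply functional_extensionality; intro); apply der_eq, derivable_pt_lim_scalr, HD.
Qed.

Lemma ds_tens phi psi E : smooth_chain E -> E 0%nat = psi -> ds (tens phi psi) = tens phi (E 1%nat).
Proof.
  intros HE <-; unfold ds, tens.
  do 2 (apply functional_extensionality; intro); apply der_eq, (derivable_pt_lim_scal (E 0%nat)), HE.
Qed.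

Lemma H2norm2_tens L phi psi D E : D 0%nat = phi -> smooth_chain D -> E 0%nat = psi -> smooth_chain E ->
  let P i := RInt (fun x => D i x ^ 2) 0 L in
  let Q j := RInt (fun s => E j s ^ 2) 0 1 in
  H2norm2 L (tens phi psi) =
  sqrt (P 0%nat * Q 0%nat + P 1%nat * Q 0%nat + P 0%nat * Q 1%nat
        + P 2%nat * Q 0%nat + P 1%nat * Q 1%nat + P 0%nat * Q 2%nat).
Proof.
  intros D0 HD E0 HE P Q; unfold H2norm2.
  rewrite (dx_tens _ _ D HD D0), (ds_tens _ _ E HE E0),
    (dx_tens _ _ (fun k => D (S k)) (smooth_chain_shift D HD) eq_refl), (dx_tens _ _ D HD D0),
    (ds_tens _ _ (fun k => E (S k)) (smooth_chain_shift E HE) eq_refl).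
  f_equal; unfold Int2, tens; subst phi psi.
  assert (HDc : forall k z, continuity_pt (D k) z) by (intros; apply smooth_chain_continuity, HD).
  assert (HEc : forall k z, continuity_pt (E k) z) by (intros; apply smooth_chain_continuity, HE).
  assert (Hex : forall (f : R -> R) a b, (forall z, continuity_pt f z) -> ex_RInt f a b)
    by (intros; apply ex_RInt_cont; auto).
  replace (fun s => Defs.RInt (fun x =>
      (D 0%nat x * E 0%nat s) ^ 2 + (D 1%nat x * E 0%nat s) ^ 2 + (D 0%nat x * E 1%nat s) ^ 2
      + (D 2%nat x * E 0%nat s) ^ 2 + (D 1%nat x * E 1%nat s) ^ 2 + (D 0%nat x * E 2%nat s) ^ 2) 0 L)
    with (fun s => E 0%nat s ^ 2 * P 0%nat + E 0%nat s ^ 2 * P 1%nat + E 1%nat s ^ 2 * P 0%nat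
                   + E 0%nat s ^ 2 * P 2%nat + E 1%nat s ^ 2 * P 1%nat + E 2%nat s ^ 2 * P 0%nat).
  - rewrite RInt_total_eq by (apply Hex; intros; cont; auto).
    rewrite !RInt_plus_R, !RInt_scalr_R by (try apply Hex; intros; cont; auto).
    unfold Q; ring.
  - apply functional_extensionality; intro s.
    rewrite RInt_total_eq by (apply Hex; intros; cont; auto).
    rewrite (RInt_ext_R _ (fun x => D 0%nat x ^ 2 * E 0%nat s ^ 2 + D 1%nat x ^ 2 * E 0%nat s ^ 2
        + D 0%nat x ^ 2 * E 1%nat s ^ 2 + D 2%nat x ^ 2 * E 0%nat s ^ 2
        + D 1%nat x ^ 2 * E 1%nat s ^ 2 + D 0%nat x ^ 2 * E 2%nat s ^ 2)) by (intros; ring).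
    rewrite !RInt_plus_R, !RInt_scalr_R by (try apply Hex; intros; cont; auto).
    unfold P; ring.
Qed.

Lemma H2norm2_tens_le L phi psi : test1 L phi -> test1 1 psi ->
  H2norm2 L (tens phi psi) <= H2norm1 1 psi * H2norm1 L phi.
Proof.
  intros Hphi Hpsi.
  destruct (test1_elim _ _ Hphi) as [D [D0 [HD _]]]; destruct (test1_elim _ _ Hpsi) as [E [E0 [HE _]]].
  rewrite (H2norm2_tens L phi psi D E D0 HD E0 HE), (H2norm1_eq 1 psi E E0 HE), (H2norm1_eq L phi D D0 HD).
  assert (Hpos : forall (F : nat -> R -> R) a b k, a <= b -> smooth_chain F ->
                   0 <= RInt (fun x => F k x ^ 2) a b)
    by (intros; apply RInt_sq_ge0; auto; intro; apply smooth_chain_continuity; auto).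
  assert (HL : 0 <= L).
  { destruct Hphi as [_ [a [b ?]]]; lra. }
  assert (H0 := Hpos E 0 1 0%nat ltac:(lra) HE); assert (H1 := Hpos E 0 1 1%nat ltac:(lra) HE);
    assert (H2 := Hpos E 0 1 2%nat ltac:(lra) HE).
  assert (G0 := Hpos D 0 L 0%nat HL HD); assert (G1 := Hpos D 0 L 1%nat HL HD);
    assert (G2 := Hpos D 0 L 2%nat HL HD).
  rewrite <- sqrt_mult_alt by lra; apply sqrt_le_1_alt; nra.
Qed.

Lemma L2norm2_tens L phi psi : 0 < L -> (forall x, continuity_pt phi x) -> (forall x, continuity_pt psi x) ->
  L2norm2 L (tens phi psi) = L2norm1 L phi * L2norm1 1 psi.
Proof.
  intros HL Hphi Hpsi; rewrite !L2norm1_eq by auto.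
  rewrite <- sqrt_mult_alt by (apply RInt_sq_ge0; auto; lra).
  unfold L2norm2, Int2, tens; f_equal.
  replace (fun s => Defs.RInt (fun x => (phi x * psi s) ^ 2) 0 L)
    with (fun s => psi s ^ 2 * RInt (fun x => phi x ^ 2) 0 L).
  - rewrite RInt_total_eq by (apply ex_RInt_cont; intros; cont; auto).
    rewrite RInt_scalr_R by (intros; cont; auto); ring.
  - apply functional_extensionality; intro s.
    rewrite RInt_total_eq by (apply ex_RInt_cont; intros; cont; auto).
    rewrite <- RInt_scalr_R by (intros; cont; auto); apply RInt_ext_R; intros; ring.
Qed.

Lemma W22_0_2_tens L Phi psi : 0 < L -> W22_0_1 L Phi -> test1 1 psi -> W22_0_2 L (fun n => tens (Phi n) psi).
Proof.
  intros HL [HT HC] Hpsi; split; [intro n; apply test2_tens; auto|].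
  intros eps He; set (K := H2norm1 1 psi); assert (K0 : 0 <= K) by apply sqrt_pos.
  destruct (HC (eps / (K + 1))) as [N HN]; [apply Rdiv_lt_0_compat; lra|].
  exists N; intros m n Hm Hn.
  replace (fun x s => tens (Phi m) psi x s - tens (Phi n) psi x s)
    with (tens (fun x => Phi m x - Phi n x) psi)
    by (unfold tens; do 2 (apply functional_extensionality; intro); ring).
  eapply Rle_lt_trans; [apply H2norm2_tens_le; auto; apply test1_sub; auto|].
  specialize (HN m n Hm Hn); fold K.
  assert (0 <= H2norm1 L (fun x => Phi m x - Phi n x)) by apply sqrt_pos.
  assert ((K + 1) * (eps / (K + 1)) = eps) by (field; lra).
  apply Rle_lt_trans with ((K + 1) * H2norm1 L (fun x => Phi m x - Phi n x)); [nra|].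
  apply Rlt_le_trans with ((K + 1) * (eps / (K + 1))); [apply Rmult_lt_compat_l|]; lra.
Qed.

Lemma W22_0_1_const L phi : test1 L phi -> W22_0_1 L (fun _ => phi).
Proof.
  intro Hphi; split; auto; intros eps He; exists 0%nat; intros.
  replace (fun x => phi x - phi x) with (fun _ : R => 0) by (apply functional_extensionality; intro; ring).
  unfold H2norm1; rewrite !(der_eq_fun (fun _ => 0) (fun _ => 0)) by (intro; apply derivable_pt_lim_const).
  rewrite RInt_total_eq by (apply ex_RInt_cont; intros; cont).
  rewrite (RInt_ext_R _ (fun _ => 0)) by (intros; simpl; ring).
  rewrite RInt_const_R, Rmult_0_r, sqrt_0; auto.
Qed.

Lemma W22_0_2_const L d : test2 L d -> W22_0_2 L (fun _ => d).
Proof.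
  intro Hd; split; auto; intros eps He; exists 0%nat; intros.
  replace (fun x s => d x s - d x s) with (fun _ _ : R => 0)
    by (do 2 (apply functional_extensionality; intro); ring).
  assert (Hx : dx (fun _ _ => 0) = fun _ _ => 0)
    by (unfold dx; do 2 (apply functional_extensionality; intro); apply der_eq, derivable_pt_lim_const).
  assert (Hs : ds (fun _ _ => 0) = fun _ _ => 0)
    by (unfold ds; do 2 (apply functional_extensionality; intro); apply der_eq, derivable_pt_lim_const).
  unfold H2norm2, Int2; rewrite Hs, Hx, Hx, Hs.
  replace (fun _ : R => Defs.RInt (fun _ => 0 ^ 2 + 0 ^ 2 + 0 ^ 2 + 0 ^ 2 + 0 ^ 2 + 0 ^ 2) 0 L)
    with (fun _ : R => 0).
  - rewrite RInt_total_eq by (apply ex_RInt_cont; intros; cont).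
    rewrite RInt_const_R, Rmult_0_r, sqrt_0; auto.
  - apply functional_extensionality; intro s.
    rewrite RInt_total_eq by (apply ex_RInt_cont; intros; cont).
    rewrite (RInt_ext_R _ (fun _ => 0)) by (intros; simpl; ring).
    rewrite RInt_const_R; ring.
Qed.

(** * Exchanging a distribution in [x] with an integral in [s] *)

Definition smooth_chain2 (D : nat -> nat -> R -> R -> R) :=
  (forall i j, jcont (D i j)) /\
  (forall i j x s,
      derivable_pt_lim (fun y => D i j y s) x (D (S i) j x s) /\
      derivable_pt_lim (fun t => D i j x t) s (D i (S j) x s)).

Lemma test2_elim L d : test2 L d -> exists D, D 0%nat 0%nat = d /\ smooth_chain2 D /\
  exists a b c e, 0 < a /\ a < b /\ b < L /\ 0 < c /\ c < e /\ e < 1 /\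
    forall x s, (x < a \/ b < x \/ s < c \/ e < s) -> d x s = 0.
Proof. intros [[D [H0 [H1 H2]]] H3]; exists D; repeat split; auto; apply H2. Qed.

Lemma smooth_chain2_continuity_2d D i j x s : smooth_chain2 D -> continuity_2d_pt (D i j) x s.
Proof. intros [HD _]; apply jcont_continuity_2d, HD. Qed.

Lemma smooth_chain2_continuity_s D i j x s : smooth_chain2 D -> continuity_pt (fun t => D i j x t) s.
Proof. intros [_ HD]; apply derivable_continuous_pt; exists (D i (S j) x s); apply HD. Qed.

Lemma uniform_continuity_2d_upto2 (F : nat -> R -> R -> R) a0 b0 c0 e0 eps : 0 < eps ->
  (forall k x y, (k <= 2)%nat -> a0 <= x <= b0 -> c0 <= y <= e0 -> continuity_2d_pt (F k) x y) ->
  exists del, 0 < del /\ forall k x y u v, (k <= 2)%nat -> a0 <= x <= b0 -> c0 <= y <= e0 ->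
    a0 <= u <= b0 -> c0 <= v <= e0 -> Rabs (u - x) < del -> Rabs (v - y) < del ->
    Rabs (F k u v - F k x y) < eps.
Proof.
  intros He HF.
  assert (HU := fun k Hk => uniform_continuity_2d (F k) a0 b0 c0 e0
                              (fun x y Hx Hy => HF k x y Hk Hx Hy) (mkposreal eps He)).
  destruct (HU 0%nat ltac:(lia)) as [d0 H0], (HU 1%nat ltac:(lia)) as [d1 H1], (HU 2%nat ltac:(lia)) as [d2 H2].
  exists (Rmin d0 (Rmin d1 d2)); split; [destruct d0, d1, d2; simpl; repeat apply Rmin_case; lra|].
  assert (Rmin d0 (Rmin d1 d2) <= d0) by apply Rmin_l.
  assert (Rmin d0 (Rmin d1 d2) <= d1) by (eapply Rle_trans; [apply Rmin_r | apply Rmin_l]).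
  assert (Rmin d0 (Rmin d1 d2) <= d2) by (eapply Rle_trans; [apply Rmin_r | apply Rmin_r]).
  intros [|[|[|k]]] x y u v Hk; intros; [apply H0 | apply H1 | apply H2 | lia]; auto; lra.
Qed.

Section Interchange.

Variable L : R.
Hypothesis HL : 0 < L.
Variable d : R -> R -> R.
Variable D : nat -> nat -> R -> R -> R.
Hypothesis HD0 : D 0%nat 0%nat = d.
Hypothesis HD : smooth_chain2 D.
Variables a b c e : R.
Hypothesis Hab : 0 < a /\ a < b /\ b < L.
Hypothesis Hsupp : forall x s, (x < a \/ b < x \/ s < c \/ e < s) -> d x s = 0.
Variable w : R -> R.
Hypothesis Hw : forall s, continuity_pt w s.

Definition wint (t : R) (k : nat) (x : R) := RInt (fun s => w s * D k 0%nat x s) 0 t.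

Definition slice (s : R) (k : nat) (x : R) := D k 0%nat x s.

Lemma smooth_chain_wint t : smooth_chain (wint t).
Proof.
  intros k x; apply is_derive_Reals; unfold wint.
  assert (Hd : forall u s, is_derive (fun z => w s * D k 0%nat z s) u (w s * D (S k) 0%nat u s))
    by (intros; apply is_derive_Reals, derivable_pt_lim_scal, HD).
  replace (RInt (fun s => w s * D (S k) 0%nat x s) 0 t)
    with (RInt (fun s => Derive (fun u => w s * D k 0%nat u s) x) 0 t)
    by (apply RInt_ext_R; intros; apply is_derive_unique, Hd).
  apply (is_derive_RInt_param (fun u s => w s * D k 0%nat u s)).
  - exists (mkposreal 1 Rlt_0_1); intros y _ s _; eexists; apply Hd.
  - intros s _; apply continuity_2d_pt_ext with (f := fun u v => w v * D (S k) 0%nat u v).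
    + intros u v; symmetry; apply is_derive_unique, Hd.
    + apply continuity_2d_pt_mult; [apply continuity_2d_pt_snd | apply smooth_chain2_continuity_2d]; auto.
  - exists (mkposreal 1 Rlt_0_1); intros y _; apply ex_RInt_cont; intros.
    apply continuity_pt_mult; auto; apply smooth_chain2_continuity_s; auto.
Qed.

Lemma test1_wint t : test1 L (wint t 0%nat).
Proof.
  apply (test1_intro L _ (wint t) eq_refl (smooth_chain_wint t)).
  exists a, b; destruct Hab as [? [? ?]]; repeat split; auto.
  intros x Hx; unfold wint; rewrite HD0, (RInt_ext_R _ (fun _ => 0)), RInt_const_R; [ring|].
  intros s _; rewrite Hsupp by tauto; ring.
Qed.

Lemma test1_slice s : test1 L (fun x => d x s).
Proof.
  apply (test1_intro L _ (slice s)); [unfold slice; now rewrite HD0 | intros k x; apply HD |].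
  exists a, b; destruct Hab as [? [? ?]]; repeat split; auto; intros x Hx; apply Hsupp; tauto.
Qed.

Lemma test1_slice0 s : test1 L (slice s 0%nat).
Proof. unfold slice; rewrite HD0; apply test1_slice. Qed.

Lemma slice_close t eps : 0 < eps -> exists del, 0 < del /\ forall y k x, Rabs (y - t) < del ->
  (k <= 2)%nat -> 0 <= x <= L -> Rabs (slice y k x - slice t k x) <= eps.
Proof.
  intro He; destruct (uniform_continuity_2d_upto2 (fun k x s => D k 0%nat x s) 0 L (t - 1) (t + 1) eps He)
    as [del [Hdel Hu]]; [intros; apply smooth_chain2_continuity_2d; auto|].
  exists (Rmin del 1); split; [apply Rmin_case; lra|]; intros y k x Hy Hk Hx.
  assert (Rmin del 1 <= del) by apply Rmin_l; assert (Rmin del 1 <= 1) by apply Rmin_r.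
  assert (Hy1 := Hy); apply Rabs_def2 in Hy1.
  left; apply (Hu k x t x y); auto; try lra; rewrite Rminus_diag, Rabs_R0; lra.
Qed.

(** The difference quotient of [t |-> wint t] at [t] minus its expected derivative [w t * slice t]. *)
Definition wint_quot (t h : R) (k : nat) (x : R) :=
  (1 / h) * wint (t + h) k x + ((-1 / h) * wint t k x + (- w t) * slice t k x).

Lemma smooth_chain_wint_quot t h : smooth_chain (wint_quot t h).
Proof.
  apply smooth_chain_lin, smooth_chain_lin; try apply smooth_chain_wint.
  intros k x; apply derivable_pt_lim_scal, HD.
Qed.

Lemma test1_wint_quot t h : test1 L (wint_quot t h 0%nat).
Proof. apply test1_lin, test1_lin; auto using test1_wint, test1_scal, test1_slice0. Qed.

Lemma wint_quot_small t eps : 0 < eps -> exists del, 0 < del /\ forall h k x, h <> 0 -> Rabs h < del ->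
  (k <= 2)%nat -> 0 <= x <= L -> Rabs (wint_quot t h k x) <= eps.
Proof.
  intro He;
    destruct (uniform_continuity_2d_upto2 (fun k x s => w s * D k 0%nat x s) 0 L (t - 1) (t + 1) eps He)
    as [del [Hdel Hu]].
  { intros; apply continuity_2d_pt_mult;
      [apply continuity_2d_pt_snd | apply smooth_chain2_continuity_2d]; auto. }
  exists (Rmin del 1); split; [apply Rmin_case; lra|]; intros h k x Hh0 Hh Hk Hx.
  assert (Rmin del 1 <= del) by apply Rmin_l; assert (Rmin del 1 <= 1) by apply Rmin_r.
  assert (Hg : forall s, continuity_pt (fun s => w s * D k 0%nat x s) s)
    by (intro; apply continuity_pt_mult; auto; apply smooth_chain2_continuity_s; auto).
  assert (Ex : forall u v, ex_RInt (fun s => w s * D k 0%nat x s) u v) by (intros; apply ex_RInt_cont; auto).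
  (* Chasles turns the quotient into the mean value over [t, t + h] of a function that is small there. *)
  replace (wint_quot t h k x)
    with (1 / h * RInt (fun s => w s * D k 0%nat x s - w t * D k 0%nat x t) t (t + h)).
  2:{ unfold wint_quot, wint, slice.
      rewrite RInt_minus_R, RInt_const_R, <- (RInt_Chasles_R _ 0 t (t + h)) by
        (auto; apply ex_RInt_cont; intros; apply continuity_pt_cst).
      field; auto. }
  assert (Hh1 : 0 < Rabs h) by (apply Rabs_pos_lt; auto).
  rewrite Rabs_mult, Rabs_div, Rabs_R1 by auto.
  apply Rle_trans with (1 / Rabs h * (Rabs h * eps)); [|right; field; lra].
  apply Rmult_le_compat_l; [left; apply Rdiv_lt_0_compat; lra|].
  apply abs_RInt_le_between; [intro; apply continuity_pt_minus; auto; apply continuity_pt_cst|].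
  intros s Hs; left.
  assert (Hst : Rabs (s - t) <= Rabs h).
  { destruct (Rle_dec 0 h).
    - rewrite Rmin_left, Rmax_right in Hs by lra; rewrite (Rabs_pos_eq h), Rabs_pos_eq by lra; lra.
    - rewrite Rmin_right, Rmax_left in Hs by lra; rewrite (Rabs_left h), Rabs_left1 by lra; lra. }
  assert (Hst1 : Rabs (s - t) < 1) by lra; apply Rabs_def2 in Hst1.
  apply (Hu k x t x s Hk Hx); try lra; rewrite Rminus_diag, Rabs_R0; lra.
Qed.

Section Distribution.

Variable alpha : (R -> R) -> R.
Hypothesis Halpha : Wm22_1 L alpha.

Lemma slice_val_continuity t : continuity_pt (fun s => alpha (fun x => d x s)) t.
Proof.
  apply continuity_pt_intro; intros eps He.
  destruct (Wm22_1_sup_bound L HL alpha Halpha) as [C [C0 HC]].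
  destruct (slice_close t (eps / (C + 1))) as [del [Hdel Hy]]; [apply Rdiv_lt_0_compat; lra|].
  exists del; split; auto; intros y Hyt.
  rewrite <- (Wm22_1_sub L alpha Halpha) by (auto using test1_slice).
  eapply Rle_lt_trans; [apply (HC _ (fun k x => slice y k x - slice t k x)) |].
  - apply test1_sub; auto using test1_slice.
  - unfold slice; now rewrite HD0.
  - intros k x; apply derivable_pt_lim_minus; apply HD.
  - intros; apply Hy; auto.
  - apply Rmult_div_succ_lt; auto.
Qed.

Lemma wint_val_derivable t :
  derivable_pt_lim (fun t => alpha (wint t 0%nat)) t (w t * alpha (fun x => d x t)).
Proof.
  intros eps He; destruct (Wm22_1_sup_bound L HL alpha Halpha) as [C [C0 HC]].
  destruct (wint_quot_small t (eps / (C + 1))) as [del [Hdel Hq]]; [apply Rdiv_lt_0_compat; lra|].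
  exists (mkposreal del Hdel); intros h Hh0 Hh; simpl in Hh.
  replace ((alpha (wint (t + h) 0%nat) - alpha (wint t 0%nat)) / h - w t * alpha (fun x => d x t))
    with (alpha (wint_quot t h 0%nat)).
  2:{ unfold wint_quot; rewrite !(Wm22_1_lin L alpha Halpha)
        by auto using test1_wint, test1_lin, test1_scal, test1_slice0.
      rewrite (Wm22_1_scal L HL alpha Halpha) by apply test1_slice0.
      unfold slice; rewrite HD0; field; auto. }
  eapply Rle_lt_trans.
  - apply (HC _ (wint_quot t h)); auto using test1_wint_quot, smooth_chain_wint_quot.
  - apply Rmult_div_succ_lt; auto.
Qed.

Lemma Wm22_1_wint_swap : alpha (wint 1 0%nat) = RInt (fun s => w s * alpha (fun x => d x s)) 0 1.
Proof.
  assert (Hder : forall t, Rmin 0 1 <= t <= Rmax 0 1 ->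
            is_derive (fun t => alpha (wint t 0%nat)) t (w t * alpha (fun x => d x t)))
    by (intros; apply is_derive_Reals, wint_val_derivable).
  assert (Hcont : forall t, Rmin 0 1 <= t <= Rmax 0 1 ->
            continuous (fun s => w s * alpha (fun x => d x s)) t)
    by (intros; apply continuity_pt_filterlim, continuity_pt_mult; auto using slice_val_continuity).
  rewrite (is_RInt_unique (V:=R_CompleteNormedModule) _ _ _ _
             (is_RInt_derive (V:=R_CompleteNormedModule) _ _ 0 1 Hder Hcont)).
  assert (E0 : wint 0 0%nat = fun _ => 0) by (apply functional_extensionality; intro; apply RInt_point_R).
  change (minus ?u ?v) with (u - v); rewrite E0, (Wm22_1_zero L HL alpha Halpha); ring.
Qed.

End Distribution.
End Interchange.

Lemma test1_weighted_int L d w : test2 L d -> (forall s, continuity_pt w s) ->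
  test1 L (fun x => RInt (fun s => w s * d x s) 0 1).
Proof.
  intros Hd Hw; destruct (test2_elim L d Hd) as [D [<- [HD [a [b [c [e [? [? [? [_ [_ [_ Hs]]]]]]]]]]]]].
  exact (test1_wint L _ D eq_refl HD a b c e ltac:(auto) Hs w Hw 1).
Qed.

Lemma Wm22_1_slice_continuity L alpha d s : 0 < L -> Wm22_1 L alpha -> test2 L d ->
  continuity_pt (fun s => alpha (fun x => d x s)) s.
Proof.
  intros HL Ha Hd; destruct (test2_elim L d Hd) as [D [HD0 [HD [a [b [c [e [? [? [? [_ [_ [_ Hs]]]]]]]]]]]]].
  exact (slice_val_continuity L HL d D HD0 HD a b c e ltac:(auto) Hs alpha Ha s).
Qed.

Lemma Wm22_1_weighted_int_swap L alpha d w : 0 < L -> Wm22_1 L alpha -> test2 L d ->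
  (forall s, continuity_pt w s) ->
  alpha (fun x => RInt (fun s => w s * d x s) 0 1) = RInt (fun s => w s * alpha (fun x => d x s)) 0 1.
Proof.
  intros HL Ha Hd Hw; destruct (test2_elim L d Hd) as [D [<- [HD [a [b [c [e [? [? [? [_ [_ [_ Hs]]]]]]]]]]]]].
  exact (Wm22_1_wint_swap L HL _ D eq_refl HD a b c e ltac:(auto) Hs w Hw alpha Ha).
Qed.

(** * The curve *)

Definition clamp01 (s : R) := Rmax 0 (Rmin 1 s).

Lemma clamp01_I01 s : I01 (clamp01 s).
Proof. unfold clamp01, I01; split; [apply Rmax_l | apply Rmax_lub; [lra | apply Rmin_l]]. Qed.

Lemma clamp01_id s : I01 s -> clamp01 s = s.
Proof. intros [? ?]; unfold clamp01; rewrite Rmin_right, Rmax_right; lra. Qed.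

Lemma clamp01_lipschitz y s : Rabs (clamp01 y - clamp01 s) <= Rabs (y - s).
Proof.
  unfold clamp01, Rmax, Rmin; destruct (Rle_dec 1 y), (Rle_dec 1 s);
  repeat match goal with |- context [Rle_dec ?a ?b] => destruct (Rle_dec a b) end;
  unfold Rabs; repeat match goal with |- context [Rcase_abs ?a] => destruct (Rcase_abs a) end; lra.
Qed.

(** Test functions and the exchange lemma need weights that are continuous on all of [R]. *)
Definition ext01 (f : R -> R) (s : R) := f (clamp01 s).

Lemma ext01_id f s : I01 s -> ext01 f s = f s.
Proof. intro Hs; unfold ext01; now rewrite clamp01_id. Qed.

Lemma continuity_pt_ext01 f s : (forall x, I01 x -> cont_within01 f x) -> continuity_pt (ext01 f) s.
Proof.
  intro Hf; apply continuity_pt_intro; intros eps He.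
  destruct (Hf (clamp01 s) (clamp01_I01 s) eps He) as [d [d0 Hd]].
  exists d; split; auto; intros y Hy.
  apply Hd; [apply clamp01_I01 | eapply Rle_lt_trans; [apply clamp01_lipschitz | auto]].
Qed.

Lemma deriv_within01_cont f x l : deriv_within01 f x l -> cont_within01 f x.
Proof.
  intros Hf eps He; destruct (Hf 1 Rlt_0_1) as [d [d0 Hd]].
  assert (Hl : 0 < Rabs l + 1) by (pose proof (Rabs_pos l); lra).
  exists (Rmin d (eps / (Rabs l + 1))); split; [apply Rmin_case; auto; apply Rdiv_lt_0_compat; lra|].
  intros y Hy Hyx; destruct (Req_dec y x) as [->|Hne]; [rewrite Rminus_diag, Rabs_R0; auto|].
  assert (Hyd : Rabs (y - x) < d) by (eapply Rlt_le_trans; [apply Hyx | apply Rmin_l]).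
  assert (Hye : Rabs (y - x) < eps / (Rabs l + 1)) by (eapply Rlt_le_trans; [apply Hyx | apply Rmin_r]).
  specialize (Hd y Hy Hne Hyd); assert (Hyx0 : y - x <> 0) by lra.
  assert (Hq : Rabs ((f y - f x) / (y - x)) <= Rabs l + 1).
  { replace ((f y - f x) / (y - x)) with (((f y - f x) / (y - x) - l) + l) by ring.
    eapply Rle_trans; [apply Rabs_triang | lra]. }
  replace (f y - f x) with ((f y - f x) / (y - x) * (y - x)) by (field; auto).
  rewrite Rabs_mult; assert (0 < Rabs (y - x)) by (apply Rabs_pos_lt; auto).
  apply Rle_lt_trans with ((Rabs l + 1) * Rabs (y - x)); [apply Rmult_le_compat_r; lra|].
  apply Rmult_lt_reg_r with (/ (Rabs l + 1)); [apply Rinv_0_lt_compat; lra|].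
  replace ((Rabs l + 1) * Rabs (y - x) * / (Rabs l + 1)) with (Rabs (y - x)) by (field; lra).
  exact Hye.
Qed.

Lemma deriv_within01_interior f x l : 0 < x < 1 -> deriv_within01 f x l -> derivable_pt_lim f x l.
Proof.
  intros Hx Hf eps He; destruct (Hf eps He) as [d [d0 Hd]].
  assert (Hm : 0 < Rmin d (Rmin x (1 - x))) by (repeat apply Rmin_case; lra).
  exists (mkposreal _ Hm); intros h Hh0 Hh; simpl in Hh.
  assert (Rmin d (Rmin x (1 - x)) <= d) by apply Rmin_l.
  assert (Rmin d (Rmin x (1 - x)) <= Rmin x (1 - x)) by apply Rmin_r.
  assert (Rmin x (1 - x) <= x) by apply Rmin_l; assert (Rmin x (1 - x) <= 1 - x) by apply Rmin_r.
  assert (Hh1 : Rabs h < d) by lra; assert (Hh2 : Rabs h < Rmin x (1 - x)) by lra.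
  apply Rabs_def2 in Hh2.
  assert (E := Hd (x + h) ltac:(unfold I01; lra) ltac:(lra) ltac:(replace (x + h - x) with h by ring; auto)).
  now replace (x + h - x) with h in E by ring.
Qed.

(** Differentiating [c1 N + c2 tau2 + c3 tau3 = 0] along the curve, with [tau' = k n] and [k <> 0],
    forces [(c2, c3) = c1 (- gamma3, gamma2)]. Here [(a0, a1, a2)] and [(b0, b1, b2)] are the first
    derivatives of [gamma2] and [gamma3]. *)
Lemma frame_relation_solve c1 c2 c3 a0 a1 a2 b0 b1 b2 :
  c1 * (a0 * (- b1) + b0 * a1) + c2 * a1 + c3 * b1 = 0 ->
  c1 * (a1 * (- b1) + a0 * (- b2) + (b1 * a1 + b0 * a2)) + c2 * a2 + c3 * b2 = 0 ->
  2 * a1 * a2 + 2 * b1 * b2 = 0 ->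
  a1 ^ 2 + b1 ^ 2 = 1 ->
  a2 * (- b1) + b2 * a1 <> 0 ->
  c2 = - c1 * b0 /\ c3 = c1 * a0.
Proof.
  intros E0 E1 Q S K; set (k := a2 * (- b1) + b2 * a1) in *.
  assert (Q' : a1 * a2 + b1 * b2 = 0) by lra.
  assert (Ha2 : a2 = - k * b1).
  { assert (a2 + k * b1 = a2 * (1 - (a1 ^ 2 + b1 ^ 2)) + a1 * (a1 * a2 + b1 * b2)) by (unfold k; ring).
    rewrite S, Q' in H; lra. }
  assert (Hb2 : b2 = k * a1).
  { assert (b2 - k * a1 = b2 * (1 - (a1 ^ 2 + b1 ^ 2)) + b1 * (a1 * a2 + b1 * b2)) by (unfold k; ring).
    rewrite S, Q' in H; lra. }
  assert (L2 : c3 * a1 - c2 * b1 = c1 * (a0 * a1 + b0 * b1)).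
  { rewrite Ha2, Hb2 in E1.
    assert (k * (c3 * a1 - c2 * b1 - c1 * (a0 * a1 + b0 * b1)) =
      c1 * (a1 * (- b1) + a0 * (- (k * a1)) + (b1 * a1 + b0 * (- k * b1))) + c2 * (- k * b1) + c3 * (k * a1))
      by ring.
    rewrite E1 in H; apply Rmult_integral in H; destruct H; [contradiction | lra]. }
  assert (L1 : c2 * a1 + c3 * b1 = c1 * (a0 * b1 - b0 * a1)) by lra.
  split.
  - assert (c2 * (a1 ^ 2 + b1 ^ 2) = a1 * (c2 * a1 + c3 * b1) - b1 * (c3 * a1 - c2 * b1)) by ring.
    rewrite S, L1, L2 in H; rewrite <- (Rmult_1_r (- c1 * b0)), <- S; lra.
  - assert (c3 * (a1 ^ 2 + b1 ^ 2) = b1 * (c2 * a1 + c3 * b1) + a1 * (c3 * a1 - c2 * b1)) by ring.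
    rewrite S, L1, L2 in H; rewrite <- (Rmult_1_r (c1 * a0)), <- S; lra.
Qed.

Section Curve.

Variables g2 g3 : nat -> R -> R.
Hypothesis Hcurve : admissible_curve g2 g3.

Lemma curve_derivable2 k s : (k < 6)%nat -> 0 < s < 1 -> derivable_pt_lim (g2 k) s (g2 (S k) s).
Proof. intros Hk Hs; destruct Hcurve as [[H _] _]; apply deriv_within01_interior, H; auto; red; lra. Qed.

Lemma curve_derivable3 k s : (k < 6)%nat -> 0 < s < 1 -> derivable_pt_lim (g3 k) s (g3 (S k) s).
Proof. intros Hk Hs; destruct Hcurve as [_ [[H _] _]]; apply deriv_within01_interior, H; auto; red; lra. Qed.

Lemma continuity_pt_ext01_2 k s : (k < 6)%nat -> continuity_pt (ext01 (g2 k)) s.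
Proof.
  intro Hk; destruct Hcurve as [[H _] _]; apply continuity_pt_ext01; intros.
  eapply deriv_within01_cont, H; auto.
Qed.

Lemma continuity_pt_ext01_3 k s : (k < 6)%nat -> continuity_pt (ext01 (g3 k)) s.
Proof.
  intro Hk; destruct Hcurve as [_ [[H _] _]]; apply continuity_pt_ext01; intros.
  eapply deriv_within01_cont, H; auto.
Qed.

Lemma curve_unit_speed s : I01 s -> g2 1%nat s ^ 2 + g3 1%nat s ^ 2 = 1.
Proof. destruct Hcurve as [_ [_ [H _]]]; apply H. Qed.

Lemma frame_relation_at c1 c2 c3 s :
  (forall s, 0 < s < 1 -> c1 * Nfun g2 g3 s + c2 * tau2 g2 s + c3 * tau3 g3 s = 0) ->
  0 < s < 1 -> curvature g2 g3 s <> 0 -> c2 = - c1 * g3 0%nat s /\ c3 = c1 * g2 0%nat s.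
Proof.
  intros Hrel Hs Hk; unfold tau2, tau3 in Hrel.
  assert (Hr : 0 < Rmin s (1 - s)) by (apply Rmin_case; lra).
  assert (Hloc : forall y, Rabs (y - s) < Rmin s (1 - s) -> 0 < y < 1).
  { intros y Hy; assert (Rmin s (1 - s) <= s) by apply Rmin_l.
    assert (Rmin s (1 - s) <= 1 - s) by apply Rmin_r; apply Rabs_def2 in Hy; lra. }
  assert (Drel : derivable_pt_lim (fun y => c1 * Nfun g2 g3 y + c2 * g2 1%nat y + c3 * g3 1%nat y) s
     (c1 * (g2 1%nat s * (- g3 1%nat s) + g2 0%nat s * (- g3 2%nat s)
            + (g3 1%nat s * g2 1%nat s + g3 0%nat s * g2 2%nat s))
      + c2 * g2 2%nat s + c3 * g3 2%nat s)).
  { unfold Nfun; apply derivable_pt_lim_plus; [apply derivable_pt_lim_plus|]; apply derivable_pt_lim_scal.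
    - eapply derivable_pt_lim_eq; [apply derivable_pt_lim_plus; apply derivable_pt_lim_mult;
        try apply derivable_pt_lim_opp; first [apply curve_derivable2 | apply curve_derivable3]; auto; lia|].
      cbv beta; ring.
    - apply curve_derivable2; auto; lia.
    - apply curve_derivable3; auto; lia. }
  assert (Dspeed : derivable_pt_lim (fun y => g2 1%nat y ^ 2 + g3 1%nat y ^ 2) s
     (2 * g2 1%nat s * g2 2%nat s + 2 * g3 1%nat s * g3 2%nat s)).
  { apply (derivable_pt_lim_eq_fun (fun y => g2 1%nat y * g2 1%nat y + g3 1%nat y * g3 1%nat y));
      [intro; ring|].
    eapply derivable_pt_lim_eq; [apply derivable_pt_lim_plus; apply derivable_pt_lim_mult;
      first [apply curve_derivable2 | apply curve_derivable3]; auto; lia | ring]. }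
  apply (frame_relation_solve c1 c2 c3 (g2 0%nat s) (g2 1%nat s) (g2 2%nat s)
                                        (g3 0%nat s) (g3 1%nat s) (g3 2%nat s)).
  - specialize (Hrel s Hs); unfold Nfun in Hrel; lra.
  - exact (derivable_pt_lim_locally_const
             (fun y => c1 * Nfun g2 g3 y + c2 * g2 1%nat y + c3 * g3 1%nat y) s _ _ 0 Hr
             (fun y Hy => Hrel y (Hloc y Hy)) Drel).
  - apply (derivable_pt_lim_locally_const (fun y => g2 1%nat y ^ 2 + g3 1%nat y ^ 2) s _ _ 1 Hr);
      [|exact Dspeed].
    intros y Hy; apply curve_unit_speed; specialize (Hloc y Hy); red; lra.
  - apply curve_unit_speed; red; lra.
  - exact Hk.
Qed.

(** The curvature may vanish everywhere in [(0, 1)] except at an endpoint, so the ball is moved inwards. *)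
Lemma curvature_nonzero_ball : exists m rho, 0 < rho /\
  forall s, Rabs (s - m) < rho -> 0 < s < 1 /\ curvature g2 g3 s <> 0.
Proof.
  destruct Hcurve as [_ [_ [_ [_ [s0 [Hs0 Hk0]]]]]].
  set (k := fun s => ext01 (g2 2%nat) s * (- ext01 (g3 1%nat) s) + ext01 (g3 2%nat) s * ext01 (g2 1%nat) s).
  assert (Hk : forall s, I01 s -> k s = curvature g2 g3 s)
    by (intros; unfold k, curvature; rewrite !ext01_id; auto).
  assert (Hkc : continuity_pt k s0)
    by (unfold k; cont; first [apply continuity_pt_ext01_2 | apply continuity_pt_ext01_3]; lia).
  destruct (continuity_pt_elim k s0 Hkc (Rabs (k s0))) as [r [r0 Hr]];
    [apply Rabs_pos_lt; rewrite Hk; auto|].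
  set (rho := Rmin r (1 / 2) / 4).
  assert (Rmin r (1 / 2) <= r) by apply Rmin_l; assert (Rmin r (1 / 2) <= 1 / 2) by apply Rmin_r.
  assert (0 < Rmin r (1 / 2)) by (apply Rmin_case; lra).
  destruct Hs0 as [Hs0a Hs0b].
  exists (if Rle_dec s0 (1 / 2) then s0 + 2 * rho else s0 - 2 * rho), rho.
  split; [unfold rho; lra|]; intros s Hs.
  assert (Hs01 : 0 < s < 1 /\ Rabs (s - s0) < r).
  { apply Rabs_def2 in Hs; unfold rho in *; destruct (Rle_dec s0 (1 / 2));
      (split; [lra | apply Rabs_def1; lra]). }
  destruct Hs01 as [Hs01 Hss0]; split; auto.
  rewrite <- Hk by (red; lra); intro Hz; specialize (Hr s Hss0).
  rewrite Hz, Rminus_0_l, Rabs_Ropp in Hr; lra.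
Qed.

Lemma curve_frame_independent c1 c2 c3 :
  (forall s, 0 < s < 1 -> c1 * Nfun g2 g3 s + c2 * tau2 g2 s + c3 * tau3 g3 s = 0) ->
  c1 = 0 /\ c2 = 0 /\ c3 = 0.
Proof.
  intro Hrel; destruct curvature_nonzero_ball as [m [rho [Hrho Hball]]].
  assert (Key : forall s, Rabs (s - m) < rho -> c2 = - c1 * g3 0%nat s /\ c3 = c1 * g2 0%nat s)
    by (intros s Hs; destruct (Hball s Hs); apply frame_relation_at; auto).
  assert (Hm : Rabs (m - m) < rho) by (rewrite Rminus_diag, Rabs_R0; auto).
  destruct (Hball m Hm) as [Hm01 _].
  destruct (Req_dec c1 0) as [->|Hc1].
  - destruct (Key m Hm) as [-> ->]; lra.
  - (* Otherwise [gamma] would be constant near [m], contradicting [|tau| = 1]. *)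
    exfalso.
    assert (G2 : g2 1%nat m = 0).
    { apply (derivable_pt_lim_locally_const (g2 0%nat) m _ rho (c3 / c1)); auto;
        [|apply curve_derivable2; auto; lia].
      intros y Hy; destruct (Key y Hy) as [_ ->]; field; auto. }
    assert (G3 : g3 1%nat m = 0).
    { apply (derivable_pt_lim_locally_const (g3 0%nat) m _ rho (- c2 / c1)); auto;
        [|apply curve_derivable3; auto; lia].
      intros y Hy; destruct (Key y Hy) as [-> _]; field; auto. }
    assert (H1 := curve_unit_speed m ltac:(red; lra)); rewrite G2, G3 in H1; lra.
Qed.

Definition frame k := match k with 0%nat => Nfun g2 g3 | 1%nat => tau2 g2 | _ => tau3 g3 end.

Lemma continuity_pt_ext01_frame k s : continuity_pt (ext01 (frame k)) s.
Proof.
  destruct k as [|[|k]]; [| apply continuity_pt_ext01_2; lia | apply continuity_pt_ext01_3; lia].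
  change (continuity_pt (fun s => ext01 (g2 0%nat) s * - ext01 (g3 1%nat) s
                                  + ext01 (g3 0%nat) s * ext01 (g2 1%nat) s) s).
  cont; first [apply continuity_pt_ext01_2 | apply continuity_pt_ext01_3]; lia.
Qed.

End Curve.

(** * Three-by-three linear algebra *)

Definition sum3 (F : nat -> R) := F 0%nat + F 1%nat + F 2%nat.

Definition det3 (M : nat -> nat -> R) :=
  M 0%nat 0%nat * (M 1%nat 1%nat * M 2%nat 2%nat - M 1%nat 2%nat * M 2%nat 1%nat)
  - M 0%nat 1%nat * (M 1%nat 0%nat * M 2%nat 2%nat - M 1%nat 2%nat * M 2%nat 0%nat)
  + M 0%nat 2%nat * (M 1%nat 0%nat * M 2%nat 1%nat - M 1%nat 1%nat * M 2%nat 0%nat).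

(** Cramer's inverse; with indices taken mod 3 the cofactors need no sign. *)
Definition inv3 (M : nat -> nat -> R) (i j : nat) :=
  let r1 := ((j + 1) mod 3)%nat in let r2 := ((j + 2) mod 3)%nat in
  let c1 := ((i + 1) mod 3)%nat in let c2 := ((i + 2) mod 3)%nat in
  (M r1 c1 * M r2 c2 - M r1 c2 * M r2 c1) / det3 M.

Lemma inv3_mulr M y j : det3 M <> 0 -> (j < 3)%nat ->
  sum3 (fun k => M j k * sum3 (fun l => inv3 M k l * y l)) = y j.
Proof.
  intros HM Hj; unfold sum3, inv3, det3 in *.
  destruct j as [|[|[|j]]]; [simpl; field; auto .. | lia].
Qed.

Lemma inv3_mull M x i : det3 M <> 0 -> (i < 3)%nat ->
  sum3 (fun j => inv3 M i j * sum3 (fun k => M j k * x k)) = x i.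
Proof.
  intros HM Hi; unfold sum3, inv3, det3 in *.
  destruct i as [|[|[|i]]]; [simpl; field; auto .. | lia].
Qed.

Lemma Un_cv_sum3 (c : nat -> R) (u : nat -> nat -> R) (l : nat -> R) :
  (forall k, (k < 3)%nat -> Un_cv (u k) (l k)) ->
  Un_cv (fun n => sum3 (fun k => c k * u k n)) (sum3 (fun k => c k * l k)).
Proof.
  intro Hu; unfold sum3.
  assert (Hc : forall k, (k < 3)%nat -> Un_cv (fun n => c k * u k n) (c k * l k))
    by (intros; apply (CV_mult (fun _ => c k)); auto using Un_cv_const).
  repeat apply CV_plus; apply Hc; lia.
Qed.

Lemma det3_zero_dependent (X : Type) (V : nat -> X -> R) :
  (forall x : nat -> X, det3 (fun j k => V k (x j)) = 0) ->
  exists c : nat -> R, ~ (c 0%nat = 0 /\ c 1%nat = 0 /\ c 2%nat = 0) /\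
    forall x, sum3 (fun k => c k * V k x) = 0.
Proof.
  intro Hdet; unfold sum3.
  set (cross x y := fun k => match k with
    | 0%nat => V 1%nat x * V 2%nat y - V 2%nat x * V 1%nat y
    | 1%nat => V 2%nat x * V 0%nat y - V 0%nat x * V 2%nat y
    | _ => V 0%nat x * V 1%nat y - V 1%nat x * V 0%nat y end).
  destruct (classic (exists x y, ~ (cross x y 0%nat = 0 /\ cross x y 1%nat = 0 /\ cross x y 2%nat = 0)))
    as [[x [y Hxy]]|Hpar].
  - (* Two independent value vectors: their cross product is orthogonal to every value vector. *)
    exists (cross x y); split; auto; intro z.
    rewrite <- (Hdet (fun j => match j with 0%nat => x | 1%nat => y | _ => z end)).
    unfold det3, cross; simpl; ring.
  - assert (Hpar' : forall x y, cross x y 0%nat = 0 /\ cross x y 1%nat = 0 /\ cross x y 2%nat = 0)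
      by (intros x y; apply NNPP; intro H; apply Hpar; eauto).
    unfold cross in Hpar'; simpl in Hpar'.
    destruct (classic (exists x, ~ (V 0%nat x = 0 /\ V 1%nat x = 0 /\ V 2%nat x = 0))) as [[x Hx]|Hzero].
    + destruct (classic (V 1%nat x = 0 /\ V 2%nat x = 0)) as [[H1 H2]|H12].
      * exists (fun k => match k with 0%nat => - V 2%nat x | 1%nat => 0 | _ => V 0%nat x end); simpl.
        split; [intros [? [? ?]]; apply Hx; repeat split; lra|].
        intro z; destruct (Hpar' x z) as [_ [E _]]; lra.
      * exists (fun k => match k with 0%nat => 0 | 1%nat => V 2%nat x | _ => - V 1%nat x end); simpl.
        split; [intros [? [? ?]]; apply H12; split; lra|].
        intro z; destruct (Hpar' x z) as [E _]; lra.
    + exists (fun k => match k with 0%nat => 1 | _ => 0 end); simpl; split; [lra|].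
      intro z; assert (H : V 0%nat z = 0 /\ V 1%nat z = 0 /\ V 2%nat z = 0)
        by (apply NNPP; intro H; apply Hzero; eauto).
      destruct H as [-> _]; ring.
Qed.

Definition wmoment (w psi : R -> R) := RInt (fun s => w s * psi s) 0 1.

Lemma orthogonal_test1_zero (g : R -> R) : (forall s, continuity_pt g s) ->
  (forall psi, test1 1 psi -> wmoment g psi = 0) -> forall s0, 0 < s0 < 1 -> g s0 = 0.
Proof.
  intros Hg Horth s0 Hs0; apply NNPP; intro Hg0; set (sg := g s0) in *.
  destruct (continuity_pt_elim g s0 (Hg s0) (Rabs sg / 2)) as [r [r0 Hr]];
    [assert (0 < Rabs sg) by (apply Rabs_pos_lt; auto); lra|].
  set (r' := Rmin r (Rmin s0 (1 - s0)) / 2).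
  assert (Hr' : 0 < r' /\ r' < r /\ r' < s0 /\ r' < 1 - s0).
  { unfold r'; assert (Rmin r (Rmin s0 (1 - s0)) <= r) by apply Rmin_l.
    assert (Rmin r (Rmin s0 (1 - s0)) <= Rmin s0 (1 - s0)) by apply Rmin_r.
    assert (Rmin s0 (1 - s0) <= s0) by apply Rmin_l; assert (Rmin s0 (1 - s0) <= 1 - s0) by apply Rmin_r.
    assert (0 < Rmin r (Rmin s0 (1 - s0))) by (repeat apply Rmin_case; lra); lra. }
  set (p := s0 - r'); set (q := s0 + r').
  assert (Hb := test1_bump 1 p q ltac:(unfold p; lra) ltac:(unfold p, q; lra) ltac:(unfold q; lra)).
  (* [g] keeps the sign of [g s0] on [[p, q]], the support of the bump. *)
  assert (Hsign : forall s, p <= s <= q -> 0 < sg * g s).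
  { intros s Hs; assert (Hd : Rabs (s - s0) < r) by (apply Rabs_def1; unfold p, q in Hs; lra).
    assert (0 < sg * sg) by nra; specialize (Hr s Hd); fold sg in Hr; unfold Rabs in Hr.
    destruct (Rcase_abs (g s - sg)); destruct (Rcase_abs sg); nra. }
  set (F := fun s => sg * (g s * bump p q s)).
  assert (Hbc : forall s, continuity_pt (bump p q) s) by (intro; apply (test1_continuity 1); auto).
  assert (HFc : forall s, continuity_pt F s).
  { intro; apply continuity_pt_mult; [apply continuity_pt_cst | apply continuity_pt_mult; auto]. }
  assert (Hex : forall a b, ex_RInt F a b) by (intros; apply ex_RInt_cont; auto).
  assert (Hgt : 0 < RInt F p q).
  { apply RInt_gt_0; [unfold p, q; lra | |].
    - intros x Hx; unfold F; replace (sg * (g x * bump p q x)) with ((sg * g x) * bump p q x) by ring.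
      apply Rmult_lt_0_compat; [apply Hsign; lra | apply bump_pos; auto].
    - intros x _; apply continuity_pt_filterlim; auto. }
  assert (Hge1 : 0 <= RInt F 0 p).
  { apply RInt_ge_0; auto; [unfold p; lra|]; intros x Hx; unfold F; rewrite bump_zero by lra; lra. }
  assert (Hge2 : 0 <= RInt F q 1).
  { apply RInt_ge_0; auto; [unfold q; lra|]; intros x Hx; unfold F; rewrite bump_zero by lra; lra. }
  assert (T : RInt F 0 1 = 0 :> R).
  { unfold F; rewrite RInt_scal_R;
      [|apply ex_RInt_cont; intros; apply continuity_pt_mult; auto].
    fold (wmoment g (bump p q)); rewrite Horth; auto; ring. }
  rewrite <- (RInt_Chasles_R _ 0 p 1), <- (RInt_Chasles_R _ p q 1) in T by auto; lra.
Qed.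

Lemma test_functions_separate (w : nat -> R -> R) : (forall k s, continuity_pt (w k) s) ->
  (forall c : nat -> R, (forall s, 0 < s < 1 -> sum3 (fun k => c k * w k s) = 0) ->
     c 0%nat = 0 /\ c 1%nat = 0 /\ c 2%nat = 0) ->
  exists psi : nat -> R -> R, (forall j, test1 1 (psi j)) /\
    det3 (fun j k => wmoment (w k) (psi j)) <> 0.
Proof.
  intros Hw Hind; apply NNPP; intro Hno.
  destruct (det3_zero_dependent {psi : R -> R | test1 1 psi} (fun k psi => wmoment (w k) (proj1_sig psi)))
    as [c [Hc0 Hc]].
  { intro x; apply NNPP; intro Hx; apply Hno.
    exists (fun j => proj1_sig (x j)); split; auto; intro j; exact (proj2_sig (x j)). }
  apply Hc0, Hind, orthogonal_test1_zero.
  - intro s; unfold sum3; cont; auto.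
  - intros psi Hpsi; rewrite <- (Hc (exist _ psi Hpsi)); unfold wmoment, sum3; simpl.
    assert (Hpc : forall s, continuity_pt psi s) by (intro; apply (test1_continuity 1); auto).
    rewrite <- !RInt_scal_R, <- !RInt_plus_R
      by (try apply ex_RInt_plus; apply ex_RInt_cont; intros; cont; auto).
    apply RInt_ext_R; intros; ring.
Qed.

(** * Identification of the limits *)

Lemma weak_cv1_const L As A phi : weak_cv1 L As A -> test1 L phi -> Un_cv (fun h => As h phi) (A phi).
Proof. intros Hcv Hphi; apply (Hcv _ (W22_0_1_const L phi Hphi)); auto using Un_cv_const. Qed.

Lemma weak_cv2_const L Fs F d : weak_cv2 L Fs F -> test2 L d -> Un_cv (fun h => Fs h d) (F d).
Proof. intros Hcv Hd; apply (Hcv _ (W22_0_2_const L d Hd)); auto using Un_cv_const. Qed.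

Lemma RInt_total_eq01 (f g : R -> R) : (forall s, continuity_pt g s) -> (forall s, 0 < s < 1 -> f s = g s) ->
  Defs.RInt f 0 1 = RInt g 0 1.
Proof.
  intros Hg Hfg; assert (H01 : forall x, Rmin 0 1 < x < Rmax 0 1 -> f x = g x)
    by (intros x; rewrite Rmin_left, Rmax_right by lra; auto).
  rewrite RInt_total_eq; [apply RInt_ext_R; auto|].
  apply (ex_RInt_ext (V := R_NormedModule) g); [intros; symmetry; auto | apply ex_RInt_cont; auto].
Qed.

Lemma embed_tens L alpha beta w phi psi : 0 < L -> (forall s, continuity_pt w s) ->
  (forall s, I01 s -> beta s = w s) -> Wm22_1 L alpha -> test1 L phi -> test1 1 psi ->
  embed alpha beta (tens phi psi) = alpha phi * wmoment w psi.
Proof.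
  intros HL Hw Hbeta Ha Hphi Hpsi; unfold embed, tens, wmoment.
  assert (Hpsic : forall s, continuity_pt psi s) by (intro; apply (test1_continuity 1); auto).
  rewrite (RInt_total_eq01 _ (fun s => alpha phi * (w s * psi s))).
  - apply RInt_scal_R, ex_RInt_cont; intros; apply continuity_pt_mult; auto.
  - intro; cont; auto.
  - intros s Hs; rewrite Hbeta by (red; lra).
    replace (fun x => phi x * psi s) with (fun x => psi s * phi x)
      by (apply functional_extensionality; intro; ring).
    rewrite (Wm22_1_scal L HL alpha Ha phi (psi s) Hphi); ring.
Qed.

Lemma embed_weighted_int L alpha beta w d : 0 < L -> (forall s, continuity_pt w s) ->
  (forall s, I01 s -> beta s = w s) -> Wm22_1 L alpha -> test2 L d ->
  embed alpha beta d = alpha (fun x => RInt (fun s => w s * d x s) 0 1).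
Proof.
  intros HL Hw Hbeta Ha Hd; rewrite (Wm22_1_weighted_int_swap L) by auto.
  apply RInt_total_eq01; [intro; apply continuity_pt_mult; [auto | eapply Wm22_1_slice_continuity; eauto]|].
  intros s Hs; rewrite Hbeta by (red; lra); reflexivity.
Qed.

Definition moments (w psi : nat -> R -> R) (j k : nat) := wmoment (w k) (psi j).

Section Identification.

Variable L : R.
Hypothesis HL : 0 < L.
Variables w beta : nat -> R -> R.
Hypothesis Hw : forall k s, continuity_pt (w k) s.
Hypothesis Hbeta : forall k s, I01 s -> beta k s = w k s.
Variable psi : nat -> R -> R.
Hypothesis Hpsi : forall j, test1 1 (psi j).
Hypothesis Hdet : det3 (moments w psi) <> 0.
Variable f : (R -> R -> R) -> R.
Hypothesis Hf : Wm22_2 L f.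

(** The candidate limit [alpha_i], read off from [f] by testing against [phi (x) psi_j]. *)
Definition coef (i : nat) (phi : R -> R) :=
  sum3 (fun j => inv3 (moments w psi) i j * f (tens phi (psi j))).

Lemma f_tens_coef j phi : (j < 3)%nat ->
  f (tens phi (psi j)) = sum3 (fun k => moments w psi j k * coef k phi).
Proof. intro Hj; unfold coef; rewrite inv3_mulr; auto. Qed.

Lemma Wm22_1_coef i : Wm22_1 L (coef i).
Proof.
  split.
  - intros phi phi' c Hphi Hphi'; unfold coef, sum3; rewrite !tens_lin.
    destruct Hf as [Hlin _]; rewrite !Hlin by (apply test2_tens; auto); ring.
  - destruct Hf as [_ [C HC]].
    set (K j := Rabs (inv3 (moments w psi) i j) * Rmax C 0 * H2norm1 1 (psi j)).
    exists (sum3 K); intros phi Hphi.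
    assert (Hj : forall j, Rabs (inv3 (moments w psi) i j * f (tens phi (psi j))) <= K j * H2norm1 L phi).
    { intro j; unfold K; rewrite Rabs_mult, !Rmult_assoc; apply Rmult_le_compat_l; [apply Rabs_pos|].
      eapply Rle_trans; [apply HC, test2_tens; auto|].
      apply Rle_trans with (Rmax C 0 * H2norm2 L (tens phi (psi j))).
      - apply Rmult_le_compat_r; [apply sqrt_pos | apply Rmax_l].
      - apply Rmult_le_compat_l; [apply Rmax_r | apply H2norm2_tens_le; auto]. }
    unfold coef, sum3; eapply Rle_trans; [apply Rabs_triang|].
    eapply Rle_trans; [apply Rplus_le_compat_r, Rabs_triang|].
    specialize (Hj 0%nat) as H0; specialize (Hj 1%nat) as H1; specialize (Hj 2%nat); lra.
Qed.

Lemma L2dist1_coef i : (exists G, L2fun2 L G /\ forall d, test2 L d -> f d = - G (ds d)) ->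
  L2dist1 L (coef i).
Proof.
  intros [G [[_ [CG HCG]] HfG]].
  (* [f (phi (x) psi) = - g (phi (x) psi')], which is bounded by the [L^2] norm of [phi]. *)
  assert (Hj : forall j, exists K, forall phi, test1 L phi ->
            Rabs (f (tens phi (psi j))) <= K * L2norm1 L phi).
  { intro j; destruct (test1_elim _ _ (Hpsi j)) as [E [E0 [HE _]]].
    exists (Rmax CG 0 * L2norm1 1 (E 1%nat)); intros phi Hphi.
    assert (HE1 : test1 1 (E 1%nat)) by (apply (test1_deriv 1 (psi j) E); auto).
    rewrite HfG, (ds_tens phi (psi j) E HE E0), Rabs_Ropp by (apply test2_tens; auto).
    eapply Rle_trans; [apply HCG, test2_tens; auto|].
    rewrite L2norm2_tens by (auto; intro; eapply test1_continuity; eauto).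
    apply Rle_trans with (Rmax CG 0 * (L2norm1 L phi * L2norm1 1 (E 1%nat))); [|right; ring].
    apply Rmult_le_compat_r; [apply Rmult_le_pos; apply sqrt_pos | apply Rmax_l]. }
  destruct (Hj 0%nat) as [K0 H0], (Hj 1%nat) as [K1 H1], (Hj 2%nat) as [K2 H2].
  set (c j := Rabs (inv3 (moments w psi) i j)).
  exists (c 0%nat * K0 + c 1%nat * K1 + c 2%nat * K2); intros phi Hphi.
  assert (B : forall j K, Rabs (f (tens phi (psi j))) <= K ->
            Rabs (inv3 (moments w psi) i j * f (tens phi (psi j))) <= c j * K)
    by (intros; rewrite Rabs_mult; apply Rmult_le_compat_l; auto; apply Rabs_pos).
  unfold coef, sum3; eapply Rle_trans; [apply Rabs_triang|].
  eapply Rle_trans; [apply Rplus_le_compat_r, Rabs_triang|].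
  assert (B0 := B _ _ (H0 phi Hphi)); assert (B1 := B _ _ (H1 phi Hphi)); assert (B2 := B _ _ (H2 phi Hphi)).
  lra.
Qed.

Lemma coef_zero i phi : (forall d, test2 L d -> f d = 0) -> test1 L phi -> coef i phi = 0.
Proof. intros Hf0 Hphi; unfold coef, sum3; rewrite !Hf0 by (apply test2_tens; auto); ring. Qed.

Variable a : nat -> nat -> (R -> R) -> R.
Hypothesis Ha : forall k h, Wm22_1 L (a k h).
Hypothesis Hcv : weak_cv2 L (fun h d => sum3 (fun k => embed (a k h) (beta k) d)) f.

Lemma pair1_coef_cv Phi i : W22_0_1 L Phi -> (i < 3)%nat ->
  Un_cv (fun h => pair1 (a i h) Phi) (pair1 (coef i) Phi).
Proof.
  intros HPhi Hi; set (A k h := pair1 (a k h) Phi); set (B k := pair1 (coef k) Phi).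
  assert (HT : forall n, test1 L (Phi n)) by apply HPhi.
  (* Testing the weak convergence on [Phi (x) psi_j]: row [j] of the moment matrix applied to [A]
     converges to the same row applied to [B]. *)
  assert (HM : forall j, (j < 3)%nat ->
            Un_cv (fun h => sum3 (fun k => moments w psi j k * A k h))
                  (sum3 (fun k => moments w psi j k * B k))).
  { intros j Hj; apply (Hcv _ (W22_0_2_tens L Phi (psi j) HL HPhi (Hpsi j))).
    - intro h; eapply Un_cv_ext; [|apply Un_cv_sum3; intros; apply (pair1_cv L); auto].
      intro n; unfold sum3, moments; cbv beta.
      rewrite (embed_tens L _ _ (w 0%nat)), (embed_tens L _ _ (w 1%nat)), (embed_tens L _ _ (w 2%nat)); auto.
      ring.
    - eapply Un_cv_ext; [|apply Un_cv_sum3; intros; apply (pair1_cv L); auto using Wm22_1_coef].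
      intro n; symmetry; apply f_tens_coef; auto. }
  change (Un_cv (fun h => A i h) (B i)); rewrite <- (inv3_mull (moments w psi) B i Hdet Hi).
  eapply Un_cv_ext;
    [|exact (Un_cv_sum3 (inv3 (moments w psi) i)
                        (fun j h => sum3 (fun k => moments w psi j k * A k h)) _ HM)].
  intro h; exact (inv3_mull (moments w psi) (fun k => A k h) i Hdet Hi).
Qed.

Lemma weak_cv1_coef i : (i < 3)%nat -> weak_cv1 L (a i) (coef i).
Proof.
  intro Hi; apply weak_cv1_pair1; auto using Wm22_1_coef.
  intros Phi HPhi; apply pair1_coef_cv; auto.
Qed.

Lemma coef_represents d : test2 L d -> f d = sum3 (fun k => embed (coef k) (beta k) d).
Proof.
  intro Hd; set (P k := fun x => RInt (fun s => w k s * d x s) 0 1).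
  assert (HP : forall k, test1 L (P k)) by (intro; apply test1_weighted_int; auto).
  (* Both sides are limits of the same sequence: weakly in two variables, and slice by slice. *)
  apply (UL_sequence (fun h => sum3 (fun k => embed (a k h) (beta k) d))).
  - apply (weak_cv2_const L _ f d Hcv Hd).
  - replace (sum3 (fun k => embed (coef k) (beta k) d)) with (sum3 (fun k => 1 * coef k (P k))).
    + eapply Un_cv_ext; [|exact (Un_cv_sum3 (fun _ => 1) (fun k h => a k h (P k)) (fun k => coef k (P k))
                               (fun k Hk => weak_cv1_const L _ _ _ (weak_cv1_coef k Hk) (HP k)))].
      intro h; unfold sum3.
      rewrite (embed_weighted_int L _ _ (w 0%nat)), (embed_weighted_int L _ _ (w 1%nat)),
        (embed_weighted_int L _ _ (w 2%nat)); auto; unfold P; ring.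
    + unfold sum3.
      rewrite (embed_weighted_int L _ _ (w 0%nat)), (embed_weighted_int L _ _ (w 1%nat)),
        (embed_weighted_int L _ _ (w 2%nat)); auto using Wm22_1_coef; unfold P; ring.
Qed.

End Identification.

Theorem mainTheorem3
  (L : R) (HL : 0 < L)
  (g2 g3 : nat -> R -> R) (Hcurve : admissible_curve g2 g3)
  (a1 a2 a3 : nat -> (R -> R) -> R)
  (Ha1 : forall h, Wm22_1 L (a1 h))
  (Ha2 : forall h, Wm22_1 L (a2 h))
  (Ha3 : forall h, Wm22_1 L (a3 h))
  (f : (R -> R -> R) -> R) (Hf : Wm22_2 L f)
  (Hcv : weak_cv2 L
     (fun h d => embed (a1 h) (Nfun g2 g3) d + embed (a2 h) (tau2 g2) d
                 + embed (a3 h) (tau3 g3) d) f) :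
  exists b1 b2 b3 : (R -> R) -> R,
    Wm22_1 L b1 /\ Wm22_1 L b2 /\ Wm22_1 L b3 /\
    weak_cv1 L a1 b1 /\ weak_cv1 L a2 b2 /\ weak_cv1 L a3 b3 /\
    (forall d, test2 L d ->
       f d = embed b1 (Nfun g2 g3) d + embed b2 (tau2 g2) d + embed b3 (tau3 g3) d) /\
    ((exists G, L2fun2 L G /\ forall d, test2 L d -> f d = - G (ds d)) ->
       L2dist1 L b1 /\ L2dist1 L b2 /\ L2dist1 L b3) /\
    ((forall d, test2 L d -> f d = 0) ->
       (forall phi, test1 L phi -> b1 phi = 0) /\
       (forall phi, test1 L phi -> b2 phi = 0) /\
       (forall phi, test1 L phi -> b3 phi = 0)).
Proof.
  set (beta := frame g2 g3); set (w k := ext01 (beta k)).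
  assert (Hw : forall k s, continuity_pt (w k) s) by (intros; apply continuity_pt_ext01_frame; auto).
  assert (Hbeta : forall k s, I01 s -> beta k s = w k s) by (intros; unfold w; rewrite ext01_id; auto).
  destruct (test_functions_separate w Hw) as [psi [Hpsi Hdet]].
  { intros c Hc; apply (curve_frame_independent g2 g3 Hcurve); intros s Hs.
    rewrite <- (Hc s Hs); unfold sum3; rewrite <- !Hbeta by (red; lra); reflexivity. }
  set (a k := match k with 0%nat => a1 | 1%nat => a2 | _ => a3 end).
  assert (Ha : forall k h, Wm22_1 L (a k h)) by (intros [|[|k]] h; auto).
  change (weak_cv2 L (fun h d => sum3 (fun k => embed (a k h) (beta k) d)) f) in Hcv.
  set (b := coef w psi f).
  exists (b 0%nat), (b 1%nat), (b 2%nat).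
  assert (Hb : forall i, Wm22_1 L (b i)) by (intro; apply Wm22_1_coef; auto).
  assert (Hcvb : forall i, (i < 3)%nat -> weak_cv1 L (a i) (b i))
    by (intros; eapply weak_cv1_coef; eauto).
  refine (conj (Hb 0%nat) (conj (Hb 1%nat) (conj (Hb 2%nat)
    (conj (Hcvb 0%nat _) (conj (Hcvb 1%nat _) (conj (Hcvb 2%nat _) (conj _ (conj _ _)))))))); try lia.
  - intros d Hd; exact (coef_represents L HL w beta Hw Hbeta psi Hpsi Hdet f Hf a Ha Hcv d Hd).
  - intro Hg; split; [|split]; apply (L2dist1_coef L); auto.
  - intro Hf0; split; [|split]; intros; apply (coef_zero L); auto.
Qed.
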